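(* Let $\alpha_{\mathsf{snr},n_t}:=\int_0^{\sqrt{\mathsf{snr}}}\zeta_0(r)^{\frac{n_t-1}{2}}\zeta_2(r)^{\frac12}n_t r^{n_t-1}dr$. Then: (i) In the regime $n_t\,\mathsf{snr}\to0$, $\alpha_{\mathsf{snr},n_t}\sim\left(\frac2\pi\mathsf{snr}\right)^{n_t/2}$. (ii) In the regime $\mathsf{snr}/n_t\to\infty$, $$\alpha_{\mathsf{snr},n_t}\sim\begin{cases}\int_0^\infty\sqrt{\zeta_2(r)}\,dr,& n_t=1,\\ A_0^{\frac{n_t-1}{2}}A_2^{\frac12}\ln\mathsf{snr},& n_t=2,\\ \frac{2n_t}{n_t-2}A_0^{\frac{n_t-1}{2}}A_2^{\frac12}\,\mathsf{snr}^{\frac{n_t-2}{4}},& n_t\ge3.\end{cases}$$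
   Context: $\phi(t)=\frac{1}{\sqrt{2\pi}}e^{-t^2/2}$, $Q(x)=\int_x^\infty\phi(t)dt$, $\xi(s):=\frac{\phi^2(s)}{Q(s)(1-Q(s))}$, $\zeta_k(t):=\mathbb{E}[S^k\xi(tS)]$ for $S\sim\mathcal{N}(0,1)$, $k\in\mathbb{Z}$. $A_0:=\frac{1}{\sqrt{2\pi}}\int_{-\infty}^{\infty}\xi(u)du$ and $A_2:=\frac{1}{\sqrt{2\pi}}\int_{-\infty}^{\infty}\xi(u)u^2du$. $a\sim b$ means $a/b\to1$ in the indicated limit. *)

From Stdlib Require Import Reals.
From Coquelicot Require Import Coquelicot.
Open Scope R_scope.

Definition phi (t : R) : R := / sqrt (2 * PI) * exp (- t ^ 2 / 2).

Definition Q (x : R) : R := RInt_gen phi (at_point x) (Rbar_locally p_infty).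

Definition xi (s : R) : R := (phi s) ^ 2 / (Q s * (1 - Q s)).

Definition zeta (k : nat) (t : R) : R :=
  RInt_gen (fun s => s ^ k * xi (t * s) * phi s)
           (Rbar_locally m_infty) (Rbar_locally p_infty).

Definition A0 : R :=
  / sqrt (2 * PI) * RInt_gen xi (Rbar_locally m_infty) (Rbar_locally p_infty).
Definition A2 : R :=
  / sqrt (2 * PI) * RInt_gen (fun u => xi u * u ^ 2)
                      (Rbar_locally m_infty) (Rbar_locally p_infty).

(* alpha_{snr,n} = int_0^{sqrt snr} zeta0(r)^{(n-1)/2} zeta2(r)^{1/2} n r^{n-1} dr
   (zeta0 > 0, so zeta0^{(n-1)/2} = (sqrt zeta0)^(n-1)) *)
Definition alpha (snr : R) (n : nat) : R :=
  RInt (fun r => sqrt (zeta 0 r) ^ (n - 1) * sqrt (zeta 2 r) * INR n * r ^ (n - 1))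
       0 (sqrt snr).

From Stdlib Require Import Reals Lra Psatz.
From Coquelicot Require Import Coquelicot.
Open Scope R_scope.

(* [zeta_0] and [zeta_2] are Gaussian averages of [xi], which is even, smooth, equal to [2/PI]
   at 0 and bounded by [2 (1 + |u|) phi u] (Mills' ratio).  Hence [zeta_k r = 2/PI + O(r^2)] near
   0, while the substitution [u = r s] and [0 <= phi 0 - phi s <= phi 0 s^2 / 2] give
   [r zeta_0 r = A0 (1 + O(r^-2))] and [r^3 zeta_2 r = A2 (1 + O(r^-2))] at infinity.
   (i) When [n snr] is small, both functions are [(2/PI) (1 + O(snr))] on [[0, sqrt snr]], so
   [alpha] equals [(2 snr / PI)^(n/2)] up to a factor [(1 + O(snr))^(n/2) = 1 + O(n snr)]
   (Bernoulli's inequality).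
   (ii) For large [r] the integrand is [sqrt A0^(n-1) sqrt A2 n r^((n-4)/2) (1 + O(n / r^2))].
   Its integral converges for [n = 1], grows like [sqrt A0 sqrt A2 ln snr] for [n = 2] and like
   [2n/(n-2) sqrt A0^(n-1) sqrt A2 snr^((n-2)/4)] for [n >= 3], whereas the contribution of a
   neighbourhood of 0 stays bounded (by [sqrt A0 ^ n] when [n >= 3]), which is negligible once
   [snr / n] is large. *)

Ltac nonzero := repeat first [split | apply Rgt_not_eq]; try lra; try (apply pow_lt; lra).

Lemma continuous_plus_R (f g : R -> R) x :
  continuous f x -> continuous g x -> continuous (fun y => f y + g y) x.
Proof. intros; apply (continuous_plus (V:=R_NormedModule)); auto. Qed.

Lemma continuous_mult_R (f g : R -> R) x :
  continuous f x -> continuous g x -> continuous (fun y => f y * g y) x.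
Proof. intros; apply (continuous_mult (K:=R_AbsRing)); auto. Qed.

Lemma continuous_minus_R (f g : R -> R) x :
  continuous f x -> continuous g x -> continuous (fun y => f y - g y) x.
Proof.
  intros; apply (continuous_minus (V:=R_NormedModule) f g); auto.
Qed.

Lemma continuous_pow_R (f : R -> R) n x : continuous f x -> continuous (fun y => f y ^ n) x.
Proof.
  intros Hf; induction n; simpl.
  - apply continuous_const.
  - apply continuous_mult_R; auto.
Qed.

Lemma continuous_scale_comp (f : R -> R) r x :
  continuous f (r * x) -> continuous (fun y => f (r * y)) x.
Proof.
  intros Hf; apply continuous_comp; auto.
  apply continuous_mult_R; [apply continuous_const | apply continuous_id].
Qed.

Lemma continuous_of_ex_derive (f : R -> R) x : ex_derive f x -> continuous f x.
Proof. apply (ex_derive_continuous (K:=R_AbsRing) (V:=R_NormedModule)). Qed.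

Lemma continuous_of_is_derive (f : R -> R) x l : is_derive f x l -> continuous f x.
Proof. intros H; apply continuous_of_ex_derive; exists l; exact H. Qed.

Lemma continuity_pt_of_is_derive (f : R -> R) x l : is_derive f x l -> continuity_pt f x.
Proof. intros H; apply continuity_pt_filterlim, (continuous_of_is_derive f x l), H. Qed.

Lemma is_derive_mult_R (f g : R -> R) x df dg : is_derive f x df -> is_derive g x dg ->
  is_derive (fun y => f y * g y) x (df * g x + f x * dg).
Proof. intros; apply (is_derive_mult (K:=R_AbsRing)); auto; intros; apply Rmult_comm. Qed.

Lemma is_derive_minus_R (f g : R -> R) x df dg : is_derive f x df -> is_derive g x dg ->
  is_derive (fun y => f y - g y) x (df - dg).
Proof. intros; apply (is_derive_minus (K:=R_AbsRing) (V:=R_NormedModule)); auto. Qed.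

Lemma ex_RInt_continuous_R (f : R -> R) a b :
  (forall z, Rmin a b <= z <= Rmax a b -> continuous f z) -> ex_RInt f a b.
Proof. apply (ex_RInt_continuous (V:=R_CompleteNormedModule)). Qed.

Lemma RInt_Chasles_R (f : R -> R) a b c :
  ex_RInt f a b -> ex_RInt f b c -> RInt f a b + RInt f b c = RInt f a c.
Proof. apply (RInt_Chasles (V:=R_CompleteNormedModule)). Qed.

Lemma RInt_scal_R (c : R) f a b : ex_RInt f a b -> RInt (fun x => c * f x) a b = c * RInt f a b.
Proof. apply (RInt_scal (V:=R_CompleteNormedModule)). Qed.

Lemma RInt_ext_R (f g : R -> R) a b : (forall x, f x = g x) -> RInt f a b = RInt g a b.
Proof. intros E; apply RInt_ext; intros; apply E. Qed.

Lemma RInt_plus_R (f g : R -> R) a b : ex_RInt f a b -> ex_RInt g a b ->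
  RInt (fun x => f x + g x) a b = RInt f a b + RInt g a b.
Proof. apply (RInt_plus (V:=R_CompleteNormedModule)). Qed.

Lemma RInt_const_R (c a b : R) : RInt (fun _ => c) a b = c * (b - a).
Proof. rewrite (RInt_const (V:=R_CompleteNormedModule)); apply Rmult_comm. Qed.

Lemma is_RInt_derive_R (F f : R -> R) a b :
  (forall x, Rmin a b <= x <= Rmax a b -> is_derive F x (f x)) ->
  (forall x, Rmin a b <= x <= Rmax a b -> continuous f x) ->
  RInt f a b = F b - F a.
Proof.
  intros HF Hf; apply is_RInt_unique, (is_RInt_derive (V:=R_CompleteNormedModule)); auto.
Qed.

Lemma is_derive_RInt_R (f : R -> R) a x :
  (forall y, continuous f y) -> is_derive (fun b => RInt f a b) x (f x).
Proof.
  intros Hc; apply (is_derive_RInt (V:=R_NormedModule) f (fun b => RInt f a b) a x); [| apply Hc].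
  apply filter_forall; intros b; apply (RInt_correct (V:=R_CompleteNormedModule)).
  apply ex_RInt_continuous_R; auto.
Qed.

Lemma RInt_abs_le_RInt f g a b : a <= b -> ex_RInt f a b -> ex_RInt g a b ->
  (forall x, a <= x <= b -> Rabs (f x) <= g x) -> Rabs (RInt f a b) <= RInt g a b.
Proof.
  intros Hab Hf Hg H.
  eapply Rle_trans; [apply abs_RInt_le; auto|].
  apply RInt_le; auto.
  - apply ex_RInt_norm; exact Hf.
  - intros x Hx; apply H; lra.
Qed.

(** * Improper integrals over the half-line *)

Definition continuous_nonneg (f : R -> R) := forall x, 0 <= x -> continuous f x.

Definition is_RInt_pinfty (f : R -> R) (l : R) :=
  continuous_nonneg f /\ is_lim (fun b => RInt f 0 b) p_infty l.

Definition ex_RInt_pinfty (f : R -> R) := exists l, is_RInt_pinfty f l.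

Lemma ex_RInt_nonneg f a b : continuous_nonneg f -> 0 <= a -> 0 <= b -> ex_RInt f a b.
Proof.
  intros Hf Ha Hb; apply ex_RInt_continuous_R; intros z [Hz _]; apply Hf.
  eapply Rle_trans; [|exact Hz]; apply Rmin_glb; lra.
Qed.

Lemma RInt_nonneg_sub f a b : continuous_nonneg f -> 0 <= a -> 0 <= b ->
  RInt f 0 b - RInt f 0 a = RInt f a b.
Proof.
  intros Hf Ha Hb.
  rewrite <- (RInt_Chasles_R f 0 a b) by (apply ex_RInt_nonneg; auto; lra); ring.
Qed.

Lemma is_lim_pinfty_intro F (l : R) :
  (forall eps, 0 < eps -> exists M, forall x, M < x -> Rabs (F x - l) < eps) ->
  is_lim F p_infty l.
Proof.
  intros H P [eps HP]; destruct (H eps (cond_pos eps)) as [M HM].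
  exists M; intros x Hx; apply HP, HM, Hx.
Qed.

Lemma is_lim_pinfty_elim F (l : R) : is_lim F p_infty l ->
  forall eps, 0 < eps -> exists M, forall x, M < x -> Rabs (F x - l) < eps.
Proof.
  intros Hl eps He.
  destruct (Hl (fun y => Rabs (y - l) < eps)) as [M HM].
  - exists (mkposreal eps He); intros y Hy; exact Hy.
  - exists M; auto.
Qed.

Lemma is_lim_pinfty_cauchy (F : R -> R) :
  (forall eps, 0 < eps -> exists M, forall x y, M < x -> M < y -> Rabs (F x - F y) < eps) ->
  exists l : R, is_lim F p_infty l.
Proof.
  intros H.
  destruct (filterlim_locally_cauchy (U := R_CompleteSpace) (F := Rbar_locally p_infty) F)
    as [[l Hl] _].
  - intros eps; destruct (H eps (cond_pos eps)) as [M HM].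
    exists (fun x => M < x); split; [exists M; auto|].
    intros u v Hu Hv; apply (HM v u Hv Hu).
  - exists l; exact Hl.
Qed.

Lemma is_RInt_gen_at_point_pinfty f a (l : R) :
  (forall b, a <= b -> ex_RInt f a b) -> is_lim (fun b => RInt f a b) p_infty l ->
  is_RInt_gen f (at_point a) (Rbar_locally p_infty) l.
Proof.
  intros Hex Hl.
  apply filterlimi_lim_ext_loc with (f := fun ab => RInt f (fst ab) (snd ab)).
  - apply (Filter_prod _ _ _ (fun x => x = a) (fun b => a < b)); [reflexivity | exists a; auto |].
    intros x y -> Hy; apply RInt_correct, Hex; simpl in *; lra.
  - intros P HP.
    apply (Filter_prod _ _ _ (fun x => x = a) (fun b => P (RInt f a b))); [reflexivity | apply Hl, HP |].
    intros x y -> Hy; exact Hy.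
Qed.

Lemma is_RInt_gen_minfty_at_point f b (l : R) :
  (forall a, a <= b -> ex_RInt f a b) -> is_lim (fun a => RInt f a b) m_infty l ->
  is_RInt_gen f (Rbar_locally m_infty) (at_point b) l.
Proof.
  intros Hex Hl.
  apply filterlimi_lim_ext_loc with (f := fun ab => RInt f (fst ab) (snd ab)).
  - apply (Filter_prod _ _ _ (fun a => a < b) (fun x => x = b)); [exists b; auto | reflexivity |].
    intros x y Hx ->; apply RInt_correct, Hex; simpl in *; lra.
  - intros P HP.
    apply (Filter_prod _ _ _ (fun a => P (RInt f a b)) (fun x => x = b)); [apply Hl, HP | reflexivity |].
    intros x y Hx ->; exact Hx.
Qed.

Lemma RInt_gen_pinfty f l :
  is_RInt_pinfty f l -> RInt_gen f (at_point 0) (Rbar_locally p_infty) = l.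
Proof.
  intros [Hc Hl]; apply (is_RInt_gen_unique (V:=R_CompleteNormedModule)).
  apply is_RInt_gen_at_point_pinfty; auto.
  intros b Hb; apply ex_RInt_nonneg; auto; lra.
Qed.

Lemma is_RInt_pinfty_RInt_gen f :
  ex_RInt_pinfty f -> is_RInt_pinfty f (RInt_gen f (at_point 0) (Rbar_locally p_infty)).
Proof. intros [l Hl]; rewrite (RInt_gen_pinfty f l Hl); exact Hl. Qed.

Lemma RInt_le_is_RInt_pinfty f l b : is_RInt_pinfty f l ->
  (forall x, 0 < x -> 0 <= f x) -> 0 <= b -> RInt f 0 b <= l.
Proof.
  intros [Hc Hl] Hf Hb.
  apply (is_lim_le_loc (fun _ => RInt f 0 b) (fun y => RInt f 0 y) p_infty (RInt f 0 b) l);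
    [| apply is_lim_const | exact Hl].
  exists b; intros y Hy.
  assert (E := RInt_nonneg_sub f b y Hc Hb ltac:(lra)).
  assert (0 <= RInt f b y); [|lra].
  apply RInt_ge_0; [lra | apply ex_RInt_nonneg; auto; lra | intros; apply Hf; lra].
Qed.

Lemma is_RInt_pinfty_ge0 f l : is_RInt_pinfty f l -> (forall x, 0 < x -> 0 <= f x) -> 0 <= l.
Proof.
  intros Hfl Hf; eapply Rle_trans; [|apply (RInt_le_is_RInt_pinfty f l 0); auto; lra].
  rewrite RInt_point; apply Rle_refl.
Qed.

Lemma is_RInt_pinfty_gt0 f l : is_RInt_pinfty f l -> (forall x, 0 < x -> 0 < f x) -> 0 < l.
Proof.
  intros Hfl Hf.
  apply Rlt_le_trans with (RInt f 0 1).
  - apply RInt_gt_0; [lra | intros; apply Hf; lra | intros x Hx; apply (proj1 Hfl); lra].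
  - apply RInt_le_is_RInt_pinfty; auto; [intros; left; apply Hf; auto | lra].
Qed.

Lemma is_RInt_pinfty_le f g lf lg : is_RInt_pinfty f lf -> is_RInt_pinfty g lg ->
  (forall x, 0 < x -> f x <= g x) -> lf <= lg.
Proof.
  intros [Hfc Hf] [Hgc Hg] H.
  apply (is_lim_le_loc (fun b => RInt f 0 b) (fun b => RInt g 0 b) p_infty lf lg);
    [| exact Hf | exact Hg].
  exists 0; intros y Hy.
  apply RInt_le; [lra | apply ex_RInt_nonneg; auto; lra | apply ex_RInt_nonneg; auto; lra |].
  intros; apply H; lra.
Qed.

Lemma is_RInt_pinfty_plus f g lf lg : is_RInt_pinfty f lf -> is_RInt_pinfty g lg ->
  is_RInt_pinfty (fun x => f x + g x) (lf + lg).
Proof.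
  intros [Hfc Hf] [Hgc Hg]; split.
  - intros x Hx; apply continuous_plus_R; auto.
  - apply is_lim_ext_loc with (f := fun b => RInt f 0 b + RInt g 0 b); [| apply is_lim_plus'; auto].
    exists 0; intros y Hy.
    symmetry; apply (RInt_plus (V:=R_CompleteNormedModule)); apply ex_RInt_nonneg; auto; lra.
Qed.

Lemma is_RInt_pinfty_scal c f l : is_RInt_pinfty f l -> is_RInt_pinfty (fun x => c * f x) (c * l).
Proof.
  intros [Hc Hl]; split.
  - intros x Hx; apply continuous_mult_R; auto; apply continuous_const.
  - apply is_lim_ext_loc with (f := fun b => c * RInt f 0 b); [| apply (is_lim_scal_l _ c _ l), Hl].
    exists 0; intros y Hy; symmetry; apply RInt_scal_R, ex_RInt_nonneg; auto; lra.
Qed.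

Lemma is_RInt_pinfty_ext f g l : (forall x, f x = g x) ->
  is_RInt_pinfty f l -> is_RInt_pinfty g l.
Proof.
  intros E [Hc Hl]; split.
  - intros x Hx; apply (continuous_ext f); auto.
  - apply is_lim_ext with (f := fun b => RInt f 0 b); auto.
    intros b; apply RInt_ext; intros; apply E.
Qed.

Lemma is_RInt_pinfty_minus f g lf lg : is_RInt_pinfty f lf -> is_RInt_pinfty g lg ->
  is_RInt_pinfty (fun x => f x - g x) (lf - lg).
Proof.
  intros Hf Hg.
  apply (is_RInt_pinfty_ext (fun x => f x + -1 * g x)); [intros; ring |].
  replace (lf - lg) with (lf + -1 * lg) by ring.
  apply is_RInt_pinfty_plus, is_RInt_pinfty_scal; auto.
Qed.

Lemma is_RInt_pinfty_abs_le f g lf lg : is_RInt_pinfty f lf -> is_RInt_pinfty g lg ->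
  (forall x, 0 < x -> Rabs (f x) <= g x) -> Rabs lf <= lg.
Proof.
  intros Hf Hg H; apply Rabs_le; split.
  - assert (-1 * lg <= lf); [|lra].
    apply (is_RInt_pinfty_le (fun x => -1 * g x) f); auto; [apply is_RInt_pinfty_scal; auto |].
    intros x Hx; specialize (H x Hx); apply Rabs_le_between in H; lra.
  - apply (is_RInt_pinfty_le f g); auto.
    intros x Hx; specialize (H x Hx); apply Rabs_le_between in H; lra.
Qed.

Lemma ex_RInt_pinfty_dom f g lg : continuous_nonneg f -> is_RInt_pinfty g lg ->
  (forall x, 0 <= x -> Rabs (f x) <= g x) -> ex_RInt_pinfty f.
Proof.
  intros Hc [Hgc Hg] Hd.
  assert (Hcauchy : forall x y, 0 <= y <= x -> Rabs (RInt f 0 x - RInt f 0 y) <= RInt g 0 x - RInt g 0 y).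
  { intros x y Hxy.
    rewrite !RInt_nonneg_sub by (auto; lra).
    apply RInt_abs_le_RInt; try (apply ex_RInt_nonneg; auto); try lra.
    intros; apply Hd; lra. }
  destruct (is_lim_pinfty_cauchy (fun b => RInt f 0 b)) as [l Hl]; [| exists l; split; auto].
  intros eps He.
  destruct (is_lim_pinfty_elim _ _ Hg (eps / 2)) as [M HM]; [lra |].
  exists (Rmax M 0); intros x y Hx Hy.
  assert (HMx := HM x (Rle_lt_trans _ _ _ (Rmax_l M 0) Hx)).
  assert (HMy := HM y (Rle_lt_trans _ _ _ (Rmax_l M 0) Hy)).
  assert (Hx0 := Rle_lt_trans _ _ _ (Rmax_r M 0) Hx).
  assert (Hy0 := Rle_lt_trans _ _ _ (Rmax_r M 0) Hy).
  apply Rabs_lt_between in HMx; apply Rabs_lt_between in HMy.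
  destruct (Rle_lt_dec y x) as [Hyx | Hxy].
  - assert (H := Hcauchy x y ltac:(lra)); lra.
  - assert (H := Hcauchy y x ltac:(lra)); rewrite Rabs_minus_sym in H; lra.
Qed.

Lemma is_RInt_pinfty_comp_scale f l r : 0 < r ->
  is_RInt_pinfty f l -> is_RInt_pinfty (fun s => f (r * s)) (l / r).
Proof.
  intros Hr [Hc Hl].
  assert (Hcr : continuous_nonneg (fun s => f (r * s))).
  { intros x Hx; apply continuous_scale_comp, Hc; nra. }
  split; auto.
  apply is_lim_ext_loc with (f := fun b => / r * RInt f 0 (r * b)).
  - exists 0; intros b Hb.
    assert (E := RInt_comp_lin (V:=R_CompleteNormedModule) f r 0 0 b).
    rewrite Rmult_0_r, !Rplus_0_r in E.
    rewrite <- E by (apply ex_RInt_nonneg; auto; nra).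
    rewrite (RInt_ext _ (fun y => r * f (r * y))) by (intros; rewrite Rplus_0_r; reflexivity).
    rewrite RInt_scal_R by (apply ex_RInt_nonneg; auto; lra).
    field; lra.
  - replace (l / r) with (/ r * l) by (field; lra).
    apply (is_lim_scal_l _ (/ r) p_infty l).
    apply (is_lim_comp (fun b => RInt f 0 b) (fun b => r * b) p_infty l p_infty); auto.
    + intros P [M HM]; exists (M / r); intros x Hx; apply HM.
      apply (Rmult_lt_compat_l r) in Hx; auto; field_simplify in Hx; lra.
    + exists 0; intros; discriminate.
Qed.

Lemma is_lim_pinfty_inv_shift : is_lim (fun b => / (1 + b)) p_infty 0.
Proof.
  apply is_lim_pinfty_intro; intros eps He; exists (/ eps); intros x Hx.
  assert (Hx0 : 0 < x) by (apply Rlt_trans with (/ eps); auto; apply Rinv_0_lt_compat; auto).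
  rewrite Rminus_0_r, Rabs_right by (left; apply Rinv_0_lt_compat; lra).
  rewrite <- (Rinv_inv eps); apply Rinv_lt_contravar; [apply Rmult_lt_0_compat |]; try lra.
  apply Rinv_0_lt_compat; auto.
Qed.

Lemma is_RInt_pinfty_inv_sqr : is_RInt_pinfty (fun x => / (1 + x) ^ 2) 1.
Proof.
  assert (Hc : continuous_nonneg (fun x => / (1 + x) ^ 2)).
  { intros x Hx; apply continuous_of_ex_derive; auto_derive; nra. }
  split; auto.
  apply is_lim_ext_loc with (f := fun b => 1 - / (1 + b)).
  - exists 0; intros b Hb.
    rewrite (is_RInt_derive_R (fun x => - / (1 + x))).
    + field; lra.
    + intros x Hx; rewrite Rmin_left, Rmax_right in Hx by lra.
      auto_derive; [lra | field; lra].
    + intros x Hx; rewrite Rmin_left, Rmax_right in Hx by lra; apply Hc; lra.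
  - replace (Finite 1) with (Finite (1 - 0)) by (f_equal; ring).
    apply is_lim_minus'; [apply is_lim_const | apply is_lim_pinfty_inv_shift].
Qed.

Lemma RInt_gen_tail f l a : is_RInt_pinfty f l -> (forall x, continuous f x) ->
  RInt_gen f (at_point a) (Rbar_locally p_infty) = l - RInt f 0 a.
Proof.
  intros [_ Hl] Hc; apply (is_RInt_gen_unique (V:=R_CompleteNormedModule)).
  assert (Hex : forall a b, ex_RInt f a b) by (intros; apply ex_RInt_continuous_R; auto).
  apply is_RInt_gen_at_point_pinfty; auto.
  apply is_lim_ext with (f := fun b => RInt f 0 b - RInt f 0 a).
  - intros b; rewrite <- (RInt_Chasles_R f 0 a b) by auto; ring.
  - apply is_lim_minus'; [exact Hl | apply is_lim_const].
Qed.

Lemma RInt_even_reflect (f : R -> R) a : (forall x, continuous f x) -> (forall x, f (- x) = f x) ->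
  RInt f a 0 = RInt f 0 (- a).
Proof.
  intros Hc He.
  assert (Hex : forall a b, ex_RInt f a b) by (intros; apply ex_RInt_continuous_R; auto).
  assert (E := RInt_comp_lin (V:=R_CompleteNormedModule) f (-1) 0 0 (- a) (Hex _ _)).
  rewrite Rmult_0_r, !Rplus_0_r in E; replace (-1 * - a) with a in E by ring.
  rewrite <- (opp_RInt_swap (V:=R_CompleteNormedModule)), <- E by auto.
  rewrite (RInt_ext _ (fun y => -1 * f y)).
  - rewrite RInt_scal_R by auto.
    change (- (-1 * RInt f 0 (- a)) = RInt f 0 (- a)); ring.
  - intros x _; rewrite Rplus_0_r; replace (-1 * x) with (- x) by ring; rewrite He; reflexivity.
Qed.

Lemma RInt_gen_even f l : is_RInt_pinfty f l -> (forall x, continuous f x) ->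
  (forall x, f (- x) = f x) ->
  RInt_gen f (Rbar_locally m_infty) (Rbar_locally p_infty) = 2 * l.
Proof.
  intros [_ Hl] Hc He; apply (is_RInt_gen_unique (V:=R_CompleteNormedModule)).
  assert (Hex : forall a b, ex_RInt f a b) by (intros; apply ex_RInt_continuous_R; auto).
  replace (2 * l) with (plus l l) by (change (l + l = 2 * l); ring).
  apply (is_RInt_gen_Chasles (V:=R_NormedModule)) with 0.
  - apply is_RInt_gen_minfty_at_point; auto.
    apply is_lim_ext with (f := fun a => RInt f 0 (- a)).
    + intros a; symmetry; apply RInt_even_reflect; auto.
    + apply (is_lim_comp (fun b => RInt f 0 b) (fun b => - b) m_infty l p_infty); auto.
      * intros P [M HM]; exists (- M); intros x Hx; apply HM; lra.
      * exists 0; intros; discriminate.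
  - apply is_RInt_gen_at_point_pinfty; auto.
Qed.

(** * The Gaussian integral *)

Lemma exp_le x y : x <= y -> exp x <= exp y.
Proof. intros [H | ->]; [left; apply exp_increasing, H | apply Rle_refl]. Qed.

Definition gauss (t : R) := exp (- (t * t)).

Definition gauss_param (u t : R) := exp (- (u * u * (1 + t * t))) / (1 + t * t).

Lemma gauss_continuous x : continuous gauss x.
Proof. apply continuous_of_ex_derive; unfold gauss; auto_derive; auto. Qed.

Lemma gauss_param_derive u t :
  is_derive (fun z => gauss_param z t) u (-2 * u * exp (- (u * u * (1 + t * t)))).
Proof.
  assert (0 <= t * t) by nra.
  unfold gauss_param; auto_derive; [lra | field; lra].
Qed.

Lemma gauss_param_derive_continuous u t :
  continuity_2d_pt (fun u t => -2 * u * exp (- (u * u * (1 + t * t)))) u t.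
Proof.
  apply (continuity_2d_pt_mult (fun u v => -2 * u)).
  - apply (continuity_2d_pt_mult (fun u v => -2) (fun u v => u)).
    + apply continuity_2d_pt_const.
    + apply continuity_2d_pt_id1.
  - apply (continuity_1d_2d_pt_comp exp).
    + apply derivable_continuous_pt, derivable_pt_exp.
    + apply continuity_2d_pt_opp.
      apply (continuity_2d_pt_mult (fun u v => u * u) (fun u v => 1 + v * v)).
      * apply (continuity_2d_pt_mult (fun u v => u) (fun u v => u)); apply continuity_2d_pt_id1.
      * apply (continuity_2d_pt_plus (fun u v => 1) (fun u v => v * v)).
        -- apply continuity_2d_pt_const.
        -- apply (continuity_2d_pt_mult (fun u v => v) (fun u v => v)); apply continuity_2d_pt_id2.
Qed.

Lemma gauss_param_0 t : gauss_param 0 t = / (1 + t ^ 2).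
Proof.
  unfold gauss_param; replace (- (0 * 0 * (1 + t * t))) with 0 by ring.
  rewrite exp_0; field; nra.
Qed.

Lemma gauss_param_continuous u t : continuous (gauss_param u) t.
Proof.
  assert (0 <= t * t) by nra.
  apply continuous_of_ex_derive; unfold gauss_param; auto_derive; lra.
Qed.

Lemma RInt_gauss_param_derive x :
  is_derive (fun u => RInt (gauss_param u) 0 1) x (-2 * gauss x * RInt gauss 0 x).
Proof.
  assert (E : RInt (fun t => Derive (fun u => gauss_param u t) x) 0 1 = -2 * gauss x * RInt gauss 0 x).
  { rewrite (RInt_ext _ (fun t => -2 * gauss x * (x * gauss (x * t)))).
    - rewrite RInt_scal_R.
      + f_equal.
        assert (E2 := RInt_comp_lin (V:=R_CompleteNormedModule) gauss x 0 0 1).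
        rewrite Rmult_0_r, Rmult_1_r, !Rplus_0_r in E2.
        rewrite <- E2 by (apply ex_RInt_continuous_R; intros; apply gauss_continuous).
        apply RInt_ext; intros t _; rewrite Rplus_0_r; reflexivity.
      + apply ex_RInt_continuous_R; intros.
        apply continuous_mult_R; [apply continuous_const |].
        apply continuous_scale_comp, gauss_continuous.
    - intros t _.
      assert (E3 : -2 * x * exp (- (x * x * (1 + t * t))) = -2 * gauss x * (x * gauss (x * t))).
      { unfold gauss; replace (- (x * x * (1 + t * t))) with (- (x * x) + - (x * t * (x * t))) by ring.
        rewrite exp_plus; ring. }
      rewrite <- E3; apply is_derive_unique, gauss_param_derive. }
  rewrite <- E; apply is_derive_RInt_param.
  - apply filter_forall; intros y t _; eexists; apply gauss_param_derive.
  - intros t _; apply (continuity_2d_pt_ext (fun u t => -2 * u * exp (- (u * u * (1 + t * t))))).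
    + intros u v; symmetry; apply is_derive_unique, gauss_param_derive.
    + apply gauss_param_derive_continuous.
  - apply filter_forall; intros y; apply ex_RInt_continuous_R; intros; apply gauss_param_continuous.
Qed.

(* Differentiating under the integral sign, the left-hand side has derivative 0; at 0 it is
   [atan 1].  Since its second term is at most [gauss x], this yields the Gaussian integral. *)
Lemma gauss_square_identity x :
  RInt gauss 0 x * RInt gauss 0 x + RInt (gauss_param x) 0 1 = PI / 4.
Proof.
  set (h := fun x => RInt gauss 0 x * RInt gauss 0 x + RInt (gauss_param x) 0 1).
  assert (Hd : forall x, is_derive h x 0).
  { intros y.
    assert (HG := is_derive_RInt_R gauss 0 y gauss_continuous).
    replace 0 with (gauss y * RInt gauss 0 y + RInt gauss 0 y * gauss y
                    + -2 * gauss y * RInt gauss 0 y) by ring.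
    unfold h; apply (is_derive_plus (K:=R_AbsRing) (V:=R_NormedModule)); [| apply RInt_gauss_param_derive].
    apply is_derive_mult_R; auto. }
  assert (H0 : h 0 = PI / 4).
  { unfold h; rewrite RInt_point; change (zero : R) with 0.
    rewrite (RInt_ext _ (fun t => / (1 + t ^ 2))).
    - rewrite (is_RInt_derive_R atan), atan_1, atan_0; [field |..].
      + intros t _; apply is_derive_Reals, derivable_pt_lim_atan.
      + intros t _; apply continuous_of_ex_derive; auto_derive; nra.
    - intros t _; apply gauss_param_0. }
  rewrite <- H0; change (h x = h 0).
  destruct (Req_dec x 0) as [-> | Hx]; [reflexivity |].
  destruct (MVT_gen h 0 x (fun _ => 0)) as [c [_ E]].
  - intros; apply Hd.
  - intros; eapply continuity_pt_of_is_derive, Hd.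
  - lra.
Qed.

Lemma RInt_gauss_param_bounds x : 0 <= RInt (gauss_param x) 0 1 <= gauss x.
Proof.
  assert (Hex : ex_RInt (gauss_param x) 0 1).
  { apply ex_RInt_continuous_R; intros; apply gauss_param_continuous. }
  split.
  - apply RInt_ge_0; auto; [lra |].
    intros t _; unfold gauss_param; apply Rdiv_le_0_compat; [left; apply exp_pos | nra].
  - apply Rle_trans with (RInt (fun _ => gauss x) 0 1); [| rewrite RInt_const_R; lra].
    apply RInt_le; auto; [lra | apply ex_RInt_const |].
    intros t Ht; unfold gauss_param, gauss.
    assert (exp (- (x * x * (1 + t * t))) <= exp (- (x * x))) by (apply exp_le; nra).
    assert (0 < exp (- (x * x * (1 + t * t)))) by apply exp_pos.
    apply Rmult_le_reg_r with (1 + t * t); [nra |].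
    unfold Rdiv; rewrite Rmult_assoc, Rinv_l by nra; nra.
Qed.

Lemma is_RInt_pinfty_gauss : is_RInt_pinfty gauss (sqrt PI / 2).
Proof.
  split; [intros x _; apply gauss_continuous |].
  assert (Hpi : 1 < sqrt PI) by (rewrite <- sqrt_1; apply sqrt_lt_1_alt; generalize PI2_3_2; lra).
  assert (Hsq : sqrt PI * sqrt PI = PI) by (apply sqrt_sqrt; generalize PI_RGT_0; lra).
  apply is_lim_pinfty_intro; intros eps He; exists (2 / eps); intros x Hx.
  assert (Hx0 : 0 < x) by (apply Rlt_trans with (2 / eps); auto; apply Rdiv_lt_0_compat; lra).
  assert (Hid := gauss_square_identity x).
  assert (HU := RInt_gauss_param_bounds x).
  assert (HG : 0 <= RInt gauss 0 x).
  { apply RInt_ge_0; [lra | apply ex_RInt_continuous_R; intros; apply gauss_continuous |].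
    intros; left; apply exp_pos. }
  assert (Hg : gauss x <= / x).
  { unfold gauss; rewrite exp_Ropp; apply Rinv_le_contravar; auto.
    assert (H := exp_ineq1_le (x * x)); nra. }
  set (G := RInt gauss 0 x) in *.
  assert (E : G - sqrt PI / 2 = - RInt (gauss_param x) 0 1 / (G + sqrt PI / 2)).
  { field_simplify_eq; [nra | lra]. }
  rewrite E; unfold Rdiv; rewrite Rabs_mult, Rabs_Ropp, !Rabs_right;
    [| left; apply Rinv_0_lt_compat; lra | lra].
  assert (/ (G + sqrt PI / 2) <= 2) by (rewrite <- (Rinv_inv 2); apply Rinv_le_contravar; lra).
  assert (/ x < eps / 2).
  { replace (eps / 2) with (/ (2 / eps)) by (field; lra).
    apply Rinv_lt_contravar; auto; apply Rmult_lt_0_compat; auto; apply Rdiv_lt_0_compat; lra. }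
  assert (0 < / (G + sqrt PI / 2)) by (apply Rinv_0_lt_compat; lra).
  nra.
Qed.

Lemma sqrt_2PI_pos : 0 < sqrt (2 * PI).
Proof. apply sqrt_lt_R0; generalize PI_RGT_0; lra. Qed.

Lemma phi_pos x : 0 < phi x.
Proof. apply Rmult_lt_0_compat; [apply Rinv_0_lt_compat, sqrt_2PI_pos | apply exp_pos]. Qed.

Lemma phi_even x : phi (- x) = phi x.
Proof. unfold phi; replace ((- x) ^ 2) with (x ^ 2) by ring; reflexivity. Qed.

Lemma phi_0 : phi 0 = / sqrt (2 * PI).
Proof. unfold phi; replace (- 0 ^ 2 / 2) with 0 by field; rewrite exp_0; ring. Qed.

Lemma phi_eq x : phi x = phi 0 * exp (- x ^ 2 / 2).
Proof. rewrite phi_0; reflexivity. Qed.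

Lemma phi_le_phi0 x : phi x <= phi 0.
Proof.
  rewrite (phi_eq x); rewrite <- (Rmult_1_r (phi 0)) at 2.
  apply Rmult_le_compat_l; [left; apply phi_pos |].
  rewrite <- exp_0; apply exp_le; assert (0 <= x ^ 2) by apply pow2_ge_0; lra.
Qed.

Lemma phi0_le_half : phi 0 <= / 2.
Proof.
  rewrite phi_0; apply Rinv_le_contravar; [lra |].
  apply Rle_trans with (sqrt (2 * 2)); [rewrite sqrt_square; lra |].
  apply sqrt_le_1_alt; generalize PI2_3_2; lra.
Qed.

Lemma phi0_sub_le s : 0 <= phi 0 - phi s <= phi 0 * s ^ 2 / 2.
Proof.
  split; [assert (H := phi_le_phi0 s); lra |].
  rewrite (phi_eq s); assert (H := exp_ineq1_le (- s ^ 2 / 2)); assert (Hp := phi_pos 0).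
  assert (phi 0 * (1 + - s ^ 2 / 2) <= phi 0 * exp (- s ^ 2 / 2)) by (apply Rmult_le_compat_l; lra).
  lra.
Qed.

Lemma phi_continuous x : continuous phi x.
Proof. apply continuous_of_ex_derive; unfold phi; auto_derive; auto. Qed.

Lemma exp_INR_mult (n : nat) y : exp (INR n * y) = exp y ^ n.
Proof.
  induction n as [| n IH]; [simpl; rewrite Rmult_0_l; apply exp_0 |].
  rewrite S_INR, Rmult_plus_distr_r, Rmult_1_l, exp_plus, IH; simpl; ring.
Qed.

Lemma pow_le_exp (k : nat) (s : R) : 0 <= s -> (1 + s) ^ k <= INR (S k) ^ S k * exp s.
Proof.
  intros Hs; set (K := INR (S k)).
  assert (HK : 1 <= K) by (apply (le_INR 1); lia).
  assert (H1 : 0 <= (1 + s) / K <= exp (s / K)).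
  { split; [apply Rdiv_le_0_compat; lra |].
    eapply Rle_trans; [| apply exp_ineq1_le].
    apply Rmult_le_reg_l with K; [lra |]; field_simplify; lra. }
  assert (H2 : ((1 + s) / K) ^ S k <= exp s).
  { replace (exp s) with (exp (s / K) ^ S k) by (rewrite <- exp_INR_mult; fold K; f_equal; field; lra).
    apply pow_incr, H1. }
  assert (H3 : (1 + s) ^ k <= (1 + s) ^ S k).
  { simpl; rewrite <- (Rmult_1_l ((1 + s) ^ k)) at 1.
    apply Rmult_le_compat_r; [apply pow_le |]; lra. }
  unfold Rdiv in H2; rewrite Rpow_mult_distr, pow_inv in H2.
  apply Rmult_le_compat_l with (r := K ^ S k) in H2; [| apply pow_le; lra].
  rewrite Rmult_comm, Rmult_assoc, Rinv_l, Rmult_1_r in H2 by (apply pow_nonzero; lra).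
  lra.
Qed.

Lemma pow_phi_bounded (k : nat) : exists C, forall s, (1 + Rabs s) ^ k * phi s <= C.
Proof.
  exists (phi 0 * INR (S k) ^ S k * exp (/ 2)); intros s; rewrite phi_eq.
  assert (H1 := pow_le_exp k (Rabs s) (Rabs_pos s)).
  assert (H2 : exp (Rabs s) * exp (- s ^ 2 / 2) <= exp (/ 2)).
  { rewrite <- exp_plus; apply exp_le; rewrite <- pow2_abs.
    assert (0 <= (Rabs s - 1) ^ 2) by apply pow2_ge_0; lra. }
  assert (Hp := phi_pos 0); assert (He := exp_pos (- s ^ 2 / 2)).
  assert (HK : 0 <= INR (S k) ^ S k) by (apply pow_le, pos_INR).
  apply Rle_trans with (INR (S k) ^ S k * exp (Rabs s) * (phi 0 * exp (- s ^ 2 / 2))).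
  - apply Rmult_le_compat_r; [nra | exact H1].
  - replace (INR (S k) ^ S k * exp (Rabs s) * (phi 0 * exp (- s ^ 2 / 2)))
      with (phi 0 * INR (S k) ^ S k * (exp (Rabs s) * exp (- s ^ 2 / 2))) by ring.
    apply Rmult_le_compat_l; [nra | exact H2].
Qed.

Lemma ex_RInt_pinfty_phi_dom f K (j : nat) : continuous_nonneg f ->
  (forall s, 0 <= s -> Rabs (f s) <= K * ((1 + s) ^ j * phi s)) -> ex_RInt_pinfty f.
Proof.
  intros Hc Hb; destruct (pow_phi_bounded (j + 2)) as [C HC].
  assert (HK : 0 <= K).
  { assert (H := Hb 0 (Rle_refl 0)); assert (H0 := Rabs_pos (f 0)); assert (Hp := phi_pos 0).
    rewrite Rplus_0_r, pow1, Rmult_1_l in H; nra. }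
  apply ex_RInt_pinfty_dom with (fun x => K * C * / (1 + x) ^ 2) (K * C * 1); auto.
  - apply is_RInt_pinfty_scal, is_RInt_pinfty_inv_sqr.
  - intros x Hx; eapply Rle_trans; [apply Hb; auto |].
    specialize (HC x); rewrite Rabs_right, pow_add in HC by lra.
    assert (0 < (1 + x) ^ 2) by (apply pow_lt; lra).
    replace (K * C * / (1 + x) ^ 2) with (K * (C / (1 + x) ^ 2)) by (field; lra).
    apply Rmult_le_compat_l; auto.
    apply Rmult_le_reg_r with ((1 + x) ^ 2); auto.
    replace (C / (1 + x) ^ 2 * (1 + x) ^ 2) with C by (field; lra); nra.
Qed.

Lemma is_RInt_pinfty_phi : is_RInt_pinfty phi (/ 2).
Proof.
  assert (Hs2 : 0 < sqrt 2) by (apply sqrt_lt_R0; lra).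
  assert (Hpi : 0 < sqrt PI) by (apply sqrt_lt_R0, PI_RGT_0).
  apply (is_RInt_pinfty_ext (fun s => / sqrt (2 * PI) * gauss (/ sqrt 2 * s))).
  - intros x; unfold phi, gauss; f_equal; f_equal.
    replace (/ sqrt 2 * x * (/ sqrt 2 * x)) with (x * x / (sqrt 2 * sqrt 2)) by (field; lra).
    rewrite sqrt_sqrt by lra; field.
  - replace (/ 2) with (/ sqrt (2 * PI) * (sqrt PI / 2 / / sqrt 2)).
    + apply is_RInt_pinfty_scal, is_RInt_pinfty_comp_scale, is_RInt_pinfty_gauss.
      apply Rinv_0_lt_compat, Hs2.
    + rewrite sqrt_mult by (generalize PI_RGT_0; lra); field; lra.
Qed.

Lemma ex_RInt_pinfty_pow_phi (j : nat) : ex_RInt_pinfty (fun s => s ^ j * phi s).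
Proof.
  apply ex_RInt_pinfty_phi_dom with 1 j.
  - intros x _; apply continuous_mult_R; [apply continuous_pow_R, continuous_id | apply phi_continuous].
  - intros s Hs; rewrite Rmult_1_l, Rabs_mult, (Rabs_right (phi s)) by (left; apply phi_pos).
    apply Rmult_le_compat_r; [left; apply phi_pos |].
    rewrite Rabs_right by (apply Rle_ge, pow_le; lra); apply pow_incr; lra.
Qed.

Lemma is_RInt_pinfty_sqr_phi : is_RInt_pinfty (fun s => s ^ 2 * phi s) (/ 2).
Proof.
  destruct (ex_RInt_pinfty_pow_phi 2) as [m Hm].
  split; [apply Hm |].
  assert (Hd : forall s, is_derive (fun s => - s * phi s) s (s ^ 2 * phi s - phi s)).
  { intros s; unfold phi; auto_derive; [auto |].
    replace (- s ^ 2 / 2) with (- (s * (s * 1)) * / 2) by field; field.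
    apply Rgt_not_eq, sqrt_2PI_pos. }
  assert (Hc : forall x, continuous (fun s => s ^ 2 * phi s - phi s) x).
  { intros x; apply continuous_minus_R; [apply continuous_mult_R |]; try apply phi_continuous.
    apply continuous_pow_R, continuous_id. }
  apply is_lim_ext with (f := fun b => RInt phi 0 b - b * phi b).
  - intros b.
    assert (Hex : ex_RInt phi 0 b) by (apply ex_RInt_continuous_R; intros; apply phi_continuous).
    assert (E : - b * phi b = RInt (fun s => s ^ 2 * phi s - phi s) 0 b).
    { rewrite (is_RInt_derive_R (fun s => - s * phi s));
      [cbv beta; ring | intros; apply Hd | intros; apply Hc]. }
    rewrite (RInt_ext_R (fun s => s ^ 2 * phi s) (fun s => (s ^ 2 * phi s - phi s) + phi s))
      by (intros; ring).
    rewrite RInt_plus_R, <- E by (auto; apply ex_RInt_continuous_R; auto); ring.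
  - replace (Finite (/ 2)) with (Finite (/ 2 - 0)) by (f_equal; ring).
    apply is_lim_minus'; [apply is_RInt_pinfty_phi |].
    destruct (pow_phi_bounded 2) as [C HC].
    apply is_lim_pinfty_intro; intros eps He; exists (Rmax 0 (C / eps)); intros x Hx.
    assert (Hx0 := Rle_lt_trans _ _ _ (Rmax_l _ _) Hx).
    assert (HxC := Rle_lt_trans _ _ _ (Rmax_r _ _) Hx).
    specialize (HC x); rewrite Rabs_right in HC by lra.
    assert (Hp := phi_pos x).
    rewrite Rminus_0_r, Rabs_right by nra.
    assert (C < eps * x).
    { apply Rmult_lt_reg_r with (/ eps); [apply Rinv_0_lt_compat; lra |].
      replace (eps * x * / eps) with x by (field; lra); exact HxC. }
    simpl in HC; nra.
Qed.

(** * The Gaussian tail [Q] and the function [xi] *)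

Lemma Q_eq x : Q x = / 2 - RInt phi 0 x.
Proof. unfold Q; rewrite (RInt_gen_tail phi (/ 2)); auto using is_RInt_pinfty_phi, phi_continuous. Qed.

Lemma Q_derive x : is_derive Q x (- phi x).
Proof.
  apply is_derive_ext with (f := fun y => / 2 - RInt phi 0 y); [intros; symmetry; apply Q_eq |].
  replace (- phi x) with (0 - phi x) by ring.
  apply is_derive_minus_R; [auto_derive; auto | apply is_derive_RInt_R, phi_continuous].
Qed.

Lemma Q_opp x : Q (- x) = 1 - Q x.
Proof.
  rewrite !Q_eq, <- RInt_even_reflect by (auto using phi_continuous, phi_even).
  rewrite <- (opp_RInt_swap (V:=R_CompleteNormedModule))
    by (apply ex_RInt_continuous_R; intros; apply phi_continuous).
  change (/ 2 - - RInt phi 0 x = 1 - (/ 2 - RInt phi 0 x)); lra.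
Qed.

Lemma RInt_phi_bounds x : 0 <= x -> 0 <= RInt phi 0 x <= Rmin (/ 2) (phi 0 * x).
Proof.
  intros Hx.
  assert (Hex : ex_RInt phi 0 x) by (apply ex_RInt_continuous_R; intros; apply phi_continuous).
  split; [apply RInt_ge_0; auto; intros; left; apply phi_pos |].
  apply Rmin_glb.
  - apply RInt_le_is_RInt_pinfty; auto using is_RInt_pinfty_phi; intros; left; apply phi_pos.
  - apply Rle_trans with (RInt (fun _ => phi 0) 0 x); [| rewrite RInt_const_R; lra].
    apply RInt_le; auto using ex_RInt_const; intros; apply phi_le_phi0.
Qed.

Lemma is_lim_Q : is_lim Q p_infty 0.
Proof.
  apply is_lim_ext with (f := fun y => / 2 - RInt phi 0 y); [intros; symmetry; apply Q_eq |].
  replace (Finite 0) with (Finite (/ 2 - / 2)) by (f_equal; ring).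
  apply is_lim_minus'; [apply is_lim_const | apply is_RInt_pinfty_phi].
Qed.

(* [Q - phi / (1 + .)] is nonincreasing on [[0, +oo)] (its derivative is [- x phi x / (1 + x)^2])
   and tends to 0. *)
Lemma phi_div_le_Q x : 0 <= x -> phi x / (1 + x) <= Q x.
Proof.
  intros Hx; set (H := fun y => Q y - phi y / (1 + y)).
  assert (Hd : forall y, 0 <= y -> is_derive H y (- y * phi y / (1 + y) ^ 2)).
  { intros y Hy.
    assert (Hf : is_derive (fun y => phi y / (1 + y)) y (- y * phi y / (1 + y) - phi y / (1 + y) ^ 2)).
    { unfold phi; auto_derive; [lra |].
      replace (- y ^ 2 / 2) with (- (y * (y * 1)) * / 2) by field; field.
      split; apply Rgt_not_eq; [apply sqrt_2PI_pos | lra]. }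
    replace (- y * phi y / (1 + y) ^ 2)
      with (- phi y - (- y * phi y / (1 + y) - phi y / (1 + y) ^ 2)) by (field; lra).
    apply is_derive_minus_R; [apply Q_derive | exact Hf]. }
  assert (Hmono : forall y, x < y -> H y <= H x).
  { intros y Hy.
    destruct (MVT_gen H x y (fun t => - t * phi t / (1 + t) ^ 2)) as [c [Hc E]].
    - intros t Ht; rewrite Rmin_left, Rmax_right in Ht by lra; apply Hd; lra.
    - intros t Ht; rewrite Rmin_left, Rmax_right in Ht by lra.
      eapply continuity_pt_of_is_derive, Hd; lra.
    - rewrite Rmin_left, Rmax_right in Hc by lra.
      assert (0 <= c * phi c / (1 + c) ^ 2 * (y - x)).
      { apply Rmult_le_pos; [| lra]; apply Rdiv_le_0_compat; [| apply pow_lt; lra].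
        apply Rmult_le_pos; [lra | left; apply phi_pos]. }
      unfold Rdiv in *; nra. }
  assert (Hlim : is_lim H p_infty 0).
  { replace (Finite 0) with (Finite (0 - 0)) by (f_equal; ring).
    apply is_lim_minus'; [apply is_lim_Q |].
    apply is_lim_le_le_loc with (fun _ => 0) (fun y => phi 0 * / (1 + y)).
    - exists 0; intros y Hy; split.
      + apply Rdiv_le_0_compat; [left; apply phi_pos | lra].
      + apply Rmult_le_compat; [left; apply phi_pos | left; apply Rinv_0_lt_compat; lra | |].
        * apply phi_le_phi0.
        * apply Rle_refl.
    - apply is_lim_const.
    - replace (Finite 0) with (Rbar_mult (phi 0) 0) by (simpl; f_equal; ring).
      apply is_lim_scal_l, is_lim_pinfty_inv_shift. }
  assert (0 <= H x); [| unfold H in *; lra].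
  apply (is_lim_le_loc H (fun _ => H x) p_infty 0 (H x)); [| exact Hlim | apply is_lim_const].
  exists x; intros y Hy; apply Hmono, Hy.
Qed.

Lemma Q_pos_le_half x : 0 <= x -> 0 < Q x <= / 2.
Proof.
  intros Hx; split.
  - eapply Rlt_le_trans; [| apply phi_div_le_Q; auto].
    apply Rdiv_lt_0_compat; [apply phi_pos | lra].
  - rewrite Q_eq; assert (H := RInt_phi_bounds x Hx); lra.
Qed.

Lemma Q_bounds x : 0 < Q x < 1.
Proof.
  destruct (Rle_or_lt 0 x) as [Hx | Hx]; [assert (H := Q_pos_le_half x Hx); lra |].
  replace x with (- - x) by ring; rewrite Q_opp.
  assert (H := Q_pos_le_half (- x) ltac:(lra)); lra.
Qed.

Definition Qvar (x : R) := Q x * (1 - Q x).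

Lemma Qvar_pos x : 0 < Qvar x.
Proof. unfold Qvar; assert (H := Q_bounds x); nra. Qed.

Lemma Qvar_even x : Qvar (- x) = Qvar x.
Proof. unfold Qvar; rewrite Q_opp; ring. Qed.

Lemma phi_le_Qvar x : phi x <= 2 * (1 + Rabs x) * Qvar x.
Proof.
  assert (Hnonneg : forall y, 0 <= y -> phi y <= 2 * (1 + y) * Qvar y).
  { intros y Hy; unfold Qvar.
    assert (HM := phi_div_le_Q y Hy); assert (HQ := Q_pos_le_half y Hy).
    apply Rle_trans with ((1 + y) * Q y).
    - apply Rmult_le_reg_r with (/ (1 + y)); [apply Rinv_0_lt_compat; lra |].
      replace ((1 + y) * Q y * / (1 + y)) with (Q y) by (field; lra); exact HM.
    - assert (0 <= (1 + y) * Q y) by nra; nra. }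
  destruct (Rle_or_lt 0 x) as [Hx | Hx].
  - rewrite Rabs_right by lra; apply Hnonneg, Hx.
  - rewrite Rabs_left, <- phi_even, <- Qvar_even by lra; apply Hnonneg; lra.
Qed.

Lemma xi_eq x : xi x = phi x ^ 2 / Qvar x.
Proof. reflexivity. Qed.

Lemma xi_pos x : 0 < xi x.
Proof. apply Rdiv_lt_0_compat; [apply pow_lt, phi_pos | apply Qvar_pos]. Qed.

Lemma xi_even x : xi (- x) = xi x.
Proof. rewrite !xi_eq, phi_even, Qvar_even; reflexivity. Qed.

Lemma xi_le x : xi x <= 2 * (1 + Rabs x) * phi x.
Proof.
  rewrite xi_eq; assert (HD := Qvar_pos x); assert (Hl := phi_le_Qvar x); assert (Hp := phi_pos x).
  apply Rmult_le_reg_r with (Qvar x); auto.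
  unfold Rdiv; rewrite Rmult_assoc, Rinv_l by lra; simpl; nra.
Qed.

Lemma xi_0 : xi 0 = 2 / PI.
Proof.
  rewrite xi_eq; unfold Qvar; rewrite Q_eq, RInt_point; change (zero : R) with 0.
  rewrite phi_0, pow_inv, pow2_sqrt by (generalize PI_RGT_0; lra).
  field; generalize PI_RGT_0; lra.
Qed.

Lemma xi_bounded : exists B, 0 < B /\ forall u, xi u <= B.
Proof.
  destruct (pow_phi_bounded 1) as [C HC]; exists (2 * C + 1).
  assert (0 <= C).
  { eapply Rle_trans; [| apply (HC 0)]; apply Rmult_le_pos; [| left; apply phi_pos].
    apply pow_le; assert (H := Rabs_pos 0); lra. }
  split; [lra |]; intros u; eapply Rle_trans; [apply xi_le |].
  specialize (HC u); simpl in HC; lra.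
Qed.

Definition xi_deriv x := xi x * (- 2 * x + phi x * (1 - 2 * Q x) / Qvar x).

Lemma xi_derive x : is_derive xi x (xi_deriv x).
Proof.
  assert (HD := Qvar_pos x).
  assert (H1 : is_derive (fun y => phi y ^ 2) x (- 2 * x * phi x ^ 2)).
  { unfold phi; auto_derive; [auto |].
    replace (- x ^ 2 / 2) with (- (x * (x * 1)) * / 2) by field.
    field; apply Rgt_not_eq, sqrt_2PI_pos. }
  assert (H2 : is_derive Qvar x (- phi x * (1 - 2 * Q x))).
  { replace (- phi x * (1 - 2 * Q x)) with (- phi x * (1 - Q x) + Q x * (0 - - phi x)) by ring.
    apply (is_derive_mult_R Q (fun y => 1 - Q y)); [apply Q_derive |].
    apply is_derive_minus_R; [auto_derive; auto | apply Q_derive]. }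
  assert (H3 := is_derive_inv Qvar x _ H2 ltac:(lra)).
  unfold xi_deriv; rewrite xi_eq.
  replace (phi x ^ 2 / Qvar x * (-2 * x + phi x * (1 - 2 * Q x) / Qvar x)) with
    (-2 * x * phi x ^ 2 * / Qvar x + phi x ^ 2 * (- (- phi x * (1 - 2 * Q x)) / Qvar x ^ 2))
    by (field; lra).
  apply (is_derive_mult_R (fun y => phi y ^ 2) (fun y => / Qvar y)); auto.
Qed.

Lemma xi_continuous x : continuous xi x.
Proof. eapply continuous_of_is_derive, xi_derive. Qed.

Lemma one_sub_2Q_le x : Rabs (1 - 2 * Q x) <= 2 * phi 0 * Rabs x.
Proof.
  assert (Hnonneg : forall y, 0 <= y -> Rabs (1 - 2 * Q y) <= 2 * phi 0 * y).
  { intros y Hy; rewrite Q_eq.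
    assert (H := RInt_phi_bounds y Hy); assert (Hmin := Rmin_r (/ 2) (phi 0 * y)).
    rewrite Rabs_right; lra. }
  destruct (Rle_or_lt 0 x) as [Hx | Hx]; [rewrite (Rabs_right x) by lra; apply Hnonneg, Hx |].
  rewrite (Rabs_left x) by lra; replace x with (- - x) at 1 by ring; rewrite Q_opp.
  replace (1 - 2 * (1 - Q (- x))) with (- (1 - 2 * Q (- x))) by ring.
  rewrite Rabs_Ropp; apply Hnonneg; lra.
Qed.

Lemma xi_deriv_bound x : Rabs (xi_deriv x) <= 8 * Rabs x * ((1 + Rabs x) ^ 2 * phi x).
Proof.
  unfold xi_deriv.
  assert (Hxi := xi_pos x); assert (Hxl := xi_le x); assert (HD := Qvar_pos x).
  assert (Hl := phi_le_Qvar x); assert (Hp := phi_pos x); assert (H2 := one_sub_2Q_le x).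
  assert (Hp0 := phi0_le_half); assert (Hp0p := phi_pos 0); assert (Ha := Rabs_pos x).
  rewrite Rabs_mult, (Rabs_right (xi x)) by lra.
  assert (H3 : Rabs (phi x * (1 - 2 * Q x) / Qvar x) <= 2 * (1 + Rabs x) * (2 * phi 0 * Rabs x)).
  { unfold Rdiv; rewrite !Rabs_mult, (Rabs_right (phi x)), (Rabs_right (/ Qvar x))
      by (try left; try apply Rinv_0_lt_compat; lra).
    replace (phi x * Rabs (1 - 2 * Q x) * / Qvar x) with ((phi x * / Qvar x) * Rabs (1 - 2 * Q x)) by ring.
    apply Rmult_le_compat; [| apply Rabs_pos | | exact H2].
    - apply Rmult_le_pos; [lra | left; apply Rinv_0_lt_compat; lra].
    - apply Rmult_le_reg_r with (Qvar x); auto; rewrite Rmult_assoc, Rinv_l, Rmult_1_r by lra; exact Hl. }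
  assert (H4 : Rabs (-2 * x + phi x * (1 - 2 * Q x) / Qvar x) <= 4 * Rabs x * (1 + Rabs x)).
  { eapply Rle_trans; [apply Rabs_triang |]; rewrite Rabs_mult.
    replace (Rabs (-2)) with 2 by (rewrite Rabs_left by lra; ring).
    assert (2 * (1 + Rabs x) * (2 * phi 0 * Rabs x) <= 2 * (1 + Rabs x) * Rabs x) by nra.
    nra. }
  apply Rle_trans with (2 * (1 + Rabs x) * phi x * (4 * Rabs x * (1 + Rabs x))).
  - apply Rmult_le_compat; auto; try lra; apply Rabs_pos.
  - simpl; nra.
Qed.

Lemma xi_sub_xi0_le : exists K, 0 <= K /\ forall u, Rabs (xi u - xi 0) <= K * u ^ 2.
Proof.
  destruct (pow_phi_bounded 2) as [C HC].
  assert (HC0 : 0 <= C).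
  { eapply Rle_trans; [| apply (HC 0)]; apply Rmult_le_pos; [| left; apply phi_pos].
    apply pow_le; assert (H := Rabs_pos 0); lra. }
  exists (8 * C); split; [lra |]; intros u.
  destruct (MVT_gen xi 0 u xi_deriv) as [c [Hc E]].
  - intros; apply xi_derive.
  - intros; eapply continuity_pt_of_is_derive, xi_derive.
  - rewrite E, Rminus_0_r, Rabs_mult, <- pow2_abs.
    assert (Hcu : Rabs c <= Rabs u).
    { destruct (Rle_or_lt 0 u) as [Hu | Hu].
      - rewrite Rmin_left, Rmax_right in Hc by lra; rewrite !Rabs_right by lra; lra.
      - rewrite Rmin_right, Rmax_left in Hc by lra; rewrite !Rabs_left1 by lra; lra. }
    assert (Hd := xi_deriv_bound c); specialize (HC c).
    assert (Hac := Rabs_pos c); assert (Hau := Rabs_pos u).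
    apply Rle_trans with (8 * Rabs c * C * Rabs u).
    + apply Rmult_le_compat_r; auto; eapply Rle_trans; [exact Hd |].
      apply Rmult_le_compat_l; lra.
    + assert (Rabs c * (C * Rabs u) <= Rabs u * (C * Rabs u)) by (apply Rmult_le_compat_r; nra).
      simpl; lra.
Qed.

Lemma xi_lipschitz : exists L, 0 <= L /\ forall a b, Rabs (xi a - xi b) <= L * Rabs (a - b).
Proof.
  destruct (pow_phi_bounded 3) as [C HC].
  assert (HC0 : 0 <= C).
  { eapply Rle_trans; [| apply (HC 0)]; apply Rmult_le_pos; [| left; apply phi_pos].
    apply pow_le; assert (H := Rabs_pos 0); lra. }
  exists (8 * C); split; [lra |]; intros a b.
  destruct (MVT_gen xi b a xi_deriv) as [c [_ E]].
  - intros; apply xi_derive.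
  - intros; eapply continuity_pt_of_is_derive, xi_derive.
  - rewrite E, Rabs_mult; apply Rmult_le_compat_r; [apply Rabs_pos |].
    eapply Rle_trans; [apply xi_deriv_bound |].
    specialize (HC c); assert (Hpc := phi_pos c); assert (Hac := Rabs_pos c).
    simpl in HC |- *; nra.
Qed.

(** * The functions [zeta_k] *)

Definition zeta_integrand (k : nat) (r s : R) := s ^ k * xi (r * s) * phi s.

Lemma pow_opp_even (k : nat) s : Nat.Even k -> (- s) ^ k = s ^ k.
Proof. intros [m ->]; rewrite !pow_mult; f_equal; ring. Qed.

Lemma even_0 : Nat.Even 0.
Proof. exists 0%nat; reflexivity. Qed.

Lemma even_2 : Nat.Even 2.
Proof. exists 1%nat; reflexivity. Qed.

Lemma even_of_0_or_2 k : (k = 0 \/ k = 2)%nat -> Nat.Even k.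
Proof. intros [-> | ->]; [apply even_0 | apply even_2]. Qed.

Lemma zeta_integrand_continuous k r s : continuous (zeta_integrand k r) s.
Proof.
  unfold zeta_integrand; apply continuous_mult_R; [apply continuous_mult_R |].
  - apply continuous_pow_R, continuous_id.
  - apply continuous_scale_comp, xi_continuous.
  - apply phi_continuous.
Qed.

Lemma zeta_integrand_nonneg k r s : 0 <= s -> 0 <= zeta_integrand k r s.
Proof.
  intros Hs; apply Rmult_le_pos; [apply Rmult_le_pos |].
  - apply pow_le, Hs.
  - left; apply xi_pos.
  - left; apply phi_pos.
Qed.

Lemma zeta_integrand_le k r B s : (forall u, xi u <= B) -> 0 <= s ->
  zeta_integrand k r s <= B * (s ^ k * phi s).
Proof.
  intros HB Hs; unfold zeta_integrand.
  assert (0 <= s ^ k * phi s) by (apply Rmult_le_pos; [apply pow_le | left; apply phi_pos]; lra).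
  specialize (HB (r * s)); nra.
Qed.

Lemma ex_RInt_pinfty_zeta_integrand k r : ex_RInt_pinfty (zeta_integrand k r).
Proof.
  destruct xi_bounded as [B [HB HxB]].
  apply ex_RInt_pinfty_phi_dom with B k; [intros x _; apply zeta_integrand_continuous |].
  intros s Hs; rewrite Rabs_right by (apply Rle_ge, zeta_integrand_nonneg, Hs).
  eapply Rle_trans; [apply zeta_integrand_le; eauto |].
  apply Rmult_le_compat_l; [lra |]; apply Rmult_le_compat_r; [left; apply phi_pos |].
  apply pow_incr; lra.
Qed.

Lemma is_RInt_pinfty_zeta k r : Nat.Even k -> is_RInt_pinfty (zeta_integrand k r) (zeta k r / 2).
Proof.
  intros Hk; assert (H := is_RInt_pinfty_RInt_gen _ (ex_RInt_pinfty_zeta_integrand k r)).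
  set (I := RInt_gen (zeta_integrand k r) (at_point 0) (Rbar_locally p_infty)) in H.
  assert (E : zeta k r = 2 * I).
  { apply (RInt_gen_even _ _ H); [apply zeta_integrand_continuous |].
    intros s; unfold zeta_integrand; rewrite pow_opp_even, phi_even by auto.
    replace (r * - s) with (- (r * s)) by ring; rewrite xi_even; reflexivity. }
  assert (E2 : zeta k r / 2 = I) by (rewrite E; field).
  rewrite E2; exact H.
Qed.

Lemma zeta_pos k r : Nat.Even k -> 0 < zeta k r.
Proof.
  intros Hk; assert (0 < zeta k r / 2); [| lra].
  apply (is_RInt_pinfty_gt0 (zeta_integrand k r)); [apply is_RInt_pinfty_zeta, Hk |].
  intros s Hs; apply Rmult_lt_0_compat; [apply Rmult_lt_0_compat |].
  - apply pow_lt, Hs.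
  - apply xi_pos.
  - apply phi_pos.
Qed.

Lemma is_RInt_pinfty_pow_phi_half k : (k = 0 \/ k = 2)%nat ->
  is_RInt_pinfty (fun s => s ^ k * phi s) (/ 2).
Proof.
  intros [-> | ->]; [| apply is_RInt_pinfty_sqr_phi].
  apply (is_RInt_pinfty_ext phi); [intros; simpl; ring | apply is_RInt_pinfty_phi].
Qed.

Lemma zeta_le k r B : (k = 0 \/ k = 2)%nat -> (forall u, xi u <= B) -> zeta k r <= B.
Proof.
  intros Hk HB; assert (Hk' := even_of_0_or_2 k Hk).
  assert (zeta k r / 2 <= B * / 2); [| lra].
  apply (is_RInt_pinfty_le (zeta_integrand k r) (fun s => B * (s ^ k * phi s))).
  - apply is_RInt_pinfty_zeta, Hk'.
  - apply is_RInt_pinfty_scal, is_RInt_pinfty_pow_phi_half, Hk.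
  - intros s Hs; apply zeta_integrand_le; auto; lra.
Qed.

Lemma zeta_near0 : exists C, forall k r, (k = 0 \/ k = 2)%nat ->
  Rabs (zeta k r - 2 / PI) <= C * r ^ 2.
Proof.
  destruct xi_sub_xi0_le as [K [HK HT]].
  destruct (ex_RInt_pinfty_pow_phi 4) as [m4 Hm4].
  assert (Hm4p : 0 <= m4).
  { apply (is_RInt_pinfty_ge0 _ _ Hm4); intros; apply Rmult_le_pos;
    [apply pow_le | left; apply phi_pos]; lra. }
  exists (2 * K * (/ 2 + m4)); intros k r Hk; assert (Hk' := even_of_0_or_2 k Hk).
  assert (Hm : exists m, is_RInt_pinfty (fun s => s ^ (k + 2) * phi s) m /\ m <= / 2 + m4).
  { destruct Hk as [-> | ->]; [exists (/ 2) | exists m4]; split; auto; try lra.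
    apply is_RInt_pinfty_sqr_phi. }
  destruct Hm as [m [Hm Hmle]].
  assert (H : Rabs (zeta k r / 2 - xi 0 * / 2) <= K * r ^ 2 * m).
  { apply (is_RInt_pinfty_abs_le (fun s => zeta_integrand k r s - xi 0 * (s ^ k * phi s))
                                 (fun s => K * r ^ 2 * (s ^ (k + 2) * phi s))).
    - apply is_RInt_pinfty_minus; [apply is_RInt_pinfty_zeta, Hk' |].
      apply is_RInt_pinfty_scal, is_RInt_pinfty_pow_phi_half, Hk.
    - apply is_RInt_pinfty_scal, Hm.
    - intros s Hs; unfold zeta_integrand.
      replace (s ^ k * xi (r * s) * phi s - xi 0 * (s ^ k * phi s))
        with ((s ^ k * phi s) * (xi (r * s) - xi 0)) by ring.
      assert (0 <= s ^ k * phi s) by (apply Rmult_le_pos; [apply pow_le | left; apply phi_pos]; lra).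
      rewrite Rabs_mult, Rabs_right, pow_add by lra.
      replace (K * r ^ 2 * (s ^ k * s ^ 2 * phi s)) with ((s ^ k * phi s) * (K * (r * s) ^ 2)) by ring.
      apply Rmult_le_compat_l, HT; auto. }
  rewrite xi_0 in H.
  replace (zeta k r - 2 / PI) with (2 * (zeta k r / 2 - 2 / PI * / 2))
    by (field; generalize PI_RGT_0; lra).
  rewrite Rabs_mult, Rabs_right by lra.
  assert (0 <= K * r ^ 2) by (apply Rmult_le_pos; auto; apply pow2_ge_0).
  assert (K * r ^ 2 * m <= K * r ^ 2 * (/ 2 + m4)) by (apply Rmult_le_compat_l; auto).
  nra.
Qed.

Lemma lipschitz_continuous (f : R -> R) L x : 0 <= L ->
  (forall a b, Rabs (f a - f b) <= L * Rabs (a - b)) -> continuous f x.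
Proof.
  intros HL H; apply continuity_pt_filterlim; intros eps Heps.
  exists (eps / (L + 1)); split; [apply Rdiv_lt_0_compat; lra |].
  intros y [_ Hy]; simpl in Hy; unfold R_dist in *.
  eapply Rle_lt_trans; [apply H |].
  apply Rle_lt_trans with (L * (eps / (L + 1))); [apply Rmult_le_compat_l; lra |].
  apply Rmult_lt_reg_r with (L + 1); [lra |].
  replace (L * (eps / (L + 1)) * (L + 1)) with (L * eps) by (field; lra); nra.
Qed.

Lemma zeta_lipschitz k : Nat.Even k ->
  exists L, 0 <= L /\ forall r r', Rabs (zeta k r - zeta k r') <= L * Rabs (r - r').
Proof.
  intros Hk; destruct xi_lipschitz as [L [HL HLi]].
  destruct (ex_RInt_pinfty_pow_phi (k + 1)) as [m Hm].
  assert (Hmp : 0 <= m).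
  { apply (is_RInt_pinfty_ge0 _ _ Hm); intros; apply Rmult_le_pos;
    [apply pow_le | left; apply phi_pos]; lra. }
  exists (2 * L * m); split; [apply Rmult_le_pos; lra |]; intros r r'.
  assert (H : Rabs (zeta k r / 2 - zeta k r' / 2) <= L * Rabs (r - r') * m).
  { apply (is_RInt_pinfty_abs_le (fun s => zeta_integrand k r s - zeta_integrand k r' s)
                                 (fun s => L * Rabs (r - r') * (s ^ (k + 1) * phi s))).
    - apply is_RInt_pinfty_minus; apply is_RInt_pinfty_zeta, Hk.
    - apply is_RInt_pinfty_scal, Hm.
    - intros s Hs; unfold zeta_integrand.
      replace (s ^ k * xi (r * s) * phi s - s ^ k * xi (r' * s) * phi s)
        with ((s ^ k * phi s) * (xi (r * s) - xi (r' * s))) by ring.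
      assert (0 <= s ^ k * phi s) by (apply Rmult_le_pos; [apply pow_le | left; apply phi_pos]; lra).
      assert (HT := HLi (r * s) (r' * s)).
      replace (r * s - r' * s) with ((r - r') * s) in HT by ring.
      rewrite Rabs_mult, (Rabs_right s) in HT by lra.
      rewrite Rabs_mult, Rabs_right, pow_add, pow_1 by lra.
      replace (L * Rabs (r - r') * (s ^ k * s * phi s))
        with ((s ^ k * phi s) * (L * (Rabs (r - r') * s))) by ring.
      apply Rmult_le_compat_l; auto. }
  replace (zeta k r - zeta k r') with (2 * (zeta k r / 2 - zeta k r' / 2)) by field.
  rewrite Rabs_mult, Rabs_right by lra; nra.
Qed.

Lemma zeta_continuous k r : Nat.Even k -> continuous (zeta k) r.
Proof.
  intros Hk; destruct (zeta_lipschitz k Hk) as [L [HL HLi]].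
  apply lipschitz_continuous with L; auto.
Qed.

Definition xi_moment (j : nat) :=
  RInt_gen (fun u => xi u * u ^ j) (at_point 0) (Rbar_locally p_infty).

Lemma is_RInt_pinfty_xi_moment j : is_RInt_pinfty (fun u => xi u * u ^ j) (xi_moment j).
Proof.
  apply is_RInt_pinfty_RInt_gen, ex_RInt_pinfty_phi_dom with 2 (S j).
  - intros x _; apply continuous_mult_R; [apply xi_continuous | apply continuous_pow_R, continuous_id].
  - intros s Hs; rewrite Rabs_mult, (Rabs_right (xi s)), Rabs_right
      by (try apply Rle_ge, pow_le; try (left; apply xi_pos); lra).
    assert (H := xi_le s); rewrite Rabs_right in H by lra.
    assert (s ^ j <= (1 + s) ^ j) by (apply pow_incr; lra).
    assert (0 <= s ^ j) by (apply pow_le; lra).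
    assert (Hx := xi_pos s).
    apply Rle_trans with (2 * (1 + s) * phi s * (1 + s) ^ j); [apply Rmult_le_compat; lra |].
    simpl; right; ring.
Qed.

Lemma xi_moment_pos j : 0 < xi_moment j.
Proof.
  apply (is_RInt_pinfty_gt0 _ _ (is_RInt_pinfty_xi_moment j)).
  intros x Hx; apply Rmult_lt_0_compat; [apply xi_pos | apply pow_lt, Hx].
Qed.

Lemma A0_eq : A0 = 2 * phi 0 * xi_moment 0.
Proof.
  unfold A0; rewrite (RInt_gen_even xi (xi_moment 0)), phi_0;
    [ring | | apply xi_continuous | apply xi_even].
  apply (is_RInt_pinfty_ext (fun u => xi u * u ^ 0)); [intros; simpl; ring |].
  apply is_RInt_pinfty_xi_moment.
Qed.

Lemma A2_eq : A2 = 2 * phi 0 * xi_moment 2.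
Proof.
  unfold A2; rewrite (RInt_gen_even _ (xi_moment 2)), phi_0; [ring | apply is_RInt_pinfty_xi_moment | |].
  - intros; apply continuous_mult_R; [apply xi_continuous | apply continuous_pow_R, continuous_id].
  - intros u; rewrite xi_even; f_equal; ring.
Qed.

Lemma A0_pos : 0 < A0.
Proof. rewrite A0_eq; assert (H := xi_moment_pos 0); assert (H2 := phi_pos 0); nra. Qed.

Lemma A2_pos : 0 < A2.
Proof. rewrite A2_eq; assert (H := xi_moment_pos 2); assert (H2 := phi_pos 0); nra. Qed.

(* The middle term is [2 r int_0^oo xi (r s) (r s)^j (phi 0 - phi s) ds], and
   [0 <= phi 0 - phi s <= phi 0 s^2 / 2]. *)
Lemma zeta_tail_bounds j r : Nat.Even j -> 0 < r ->
  0 <= 2 * phi 0 * xi_moment j - r ^ (j + 1) * zeta j r <= phi 0 * xi_moment (j + 2) / r ^ 2.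
Proof.
  intros Hj Hr.
  set (g := fun s => xi (r * s) * (r * s) ^ j).
  assert (Hg : is_RInt_pinfty (fun s => phi 0 * g s - r ^ j * zeta_integrand j r s)
                 (phi 0 * (xi_moment j / r) - r ^ j * (zeta j r / 2))).
  { apply is_RInt_pinfty_minus; apply is_RInt_pinfty_scal; [| apply is_RInt_pinfty_zeta, Hj].
    apply (is_RInt_pinfty_comp_scale (fun u => xi u * u ^ j)), is_RInt_pinfty_xi_moment; auto. }
  assert (Hpt : forall s, 0 < s -> 0 <= phi 0 * g s - r ^ j * zeta_integrand j r s
                  <= phi 0 / (2 * r ^ 2) * (xi (r * s) * (r * s) ^ (j + 2))).
  { intros s Hs; unfold g, zeta_integrand.
    replace (phi 0 * (xi (r * s) * (r * s) ^ j) - r ^ j * (s ^ j * xi (r * s) * phi s))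
      with (xi (r * s) * (r * s) ^ j * (phi 0 - phi s)) by (rewrite Rpow_mult_distr; ring).
    replace (phi 0 / (2 * r ^ 2) * (xi (r * s) * (r * s) ^ (j + 2)))
      with (xi (r * s) * (r * s) ^ j * (phi 0 * s ^ 2 / 2)) by (rewrite pow_add; field; lra).
    assert (0 <= xi (r * s) * (r * s) ^ j)
      by (apply Rmult_le_pos; [left; apply xi_pos | apply pow_le; nra]).
    assert (Hgap := phi0_sub_le s); split; [nra | apply Rmult_le_compat_l; lra]. }
  assert (H0 := is_RInt_pinfty_ge0 _ _ Hg (fun s Hs => proj1 (Hpt s Hs))).
  assert (H1 : phi 0 * (xi_moment j / r) - r ^ j * (zeta j r / 2)
               <= phi 0 / (2 * r ^ 2) * (xi_moment (j + 2) / r)).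
  { apply (is_RInt_pinfty_le _ (fun s => phi 0 / (2 * r ^ 2) * (xi (r * s) * (r * s) ^ (j + 2))) _ _ Hg);
      [| intros s Hs; apply Hpt, Hs].
    apply is_RInt_pinfty_scal.
    apply (is_RInt_pinfty_comp_scale (fun u => xi u * u ^ (j + 2))), is_RInt_pinfty_xi_moment; auto. }
  rewrite pow_add, pow_1; split.
  - apply Rmult_le_compat_l with (r := 2 * r) in H0; [| lra].
    replace (2 * r * (phi 0 * (xi_moment j / r) - r ^ j * (zeta j r / 2)))
      with (2 * phi 0 * xi_moment j - r ^ j * r * zeta j r) in H0 by (field; lra).
    lra.
  - apply Rmult_le_compat_l with (r := 2 * r) in H1; [| lra].
    replace (2 * r * (phi 0 * (xi_moment j / r) - r ^ j * (zeta j r / 2)))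
      with (2 * phi 0 * xi_moment j - r ^ j * r * zeta j r) in H1 by (field; lra).
    replace (2 * r * (phi 0 / (2 * r ^ 2) * (xi_moment (j + 2) / r)))
      with (phi 0 * xi_moment (j + 2) / r ^ 2) in H1 by (field; lra).
    exact H1.
Qed.

(** * Bounds on the integrand of [alpha] *)

Definition alpha_integrand (n : nat) (r : R) :=
  sqrt (zeta 0 r) ^ (n - 1) * sqrt (zeta 2 r) * INR n * r ^ (n - 1).

Lemma alpha_eq snr n : alpha snr n = RInt (alpha_integrand n) 0 (sqrt snr).
Proof. reflexivity. Qed.

Lemma alpha_integrand_continuous n r : continuous (alpha_integrand n) r.
Proof.
  unfold alpha_integrand.
  repeat apply continuous_mult_R; try apply continuous_pow_R;
    try apply continuous_sqrt_comp; auto using zeta_continuous, even_0, even_2, continuous_id.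
  apply continuous_const.
Qed.

Lemma ex_RInt_alpha_integrand n a b : ex_RInt (alpha_integrand n) a b.
Proof. apply ex_RInt_continuous_R; intros; apply alpha_integrand_continuous. Qed.

Lemma alpha_integrand_nonneg n r : 0 <= r -> 0 <= alpha_integrand n r.
Proof.
  intros Hr; unfold alpha_integrand.
  repeat apply Rmult_le_pos; auto using pow_le, sqrt_pos, pos_INR.
Qed.

Lemma RInt_alpha_integrand_Chasles n a b :
  RInt (alpha_integrand n) 0 a + RInt (alpha_integrand n) a b = RInt (alpha_integrand n) 0 b.
Proof. apply RInt_Chasles_R; apply ex_RInt_alpha_integrand. Qed.

Lemma RInt_pow_pred (K : R) (n : nat) (a : R) : (1 <= n)%nat ->
  RInt (fun r => K * INR n * r ^ (n - 1)) 0 a = K * a ^ n.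
Proof.
  intros Hn; rewrite (is_RInt_derive_R (fun r => K * r ^ n)).
  - cbv beta; rewrite pow_i by lia; lra.
  - intros x _; auto_derive; auto; replace (pred n) with (n - 1)%nat by lia; ring.
  - intros x _; apply continuous_mult_R; [apply continuous_const | apply continuous_pow_R, continuous_id].
Qed.

Lemma alpha_integrand_between n r a b : (1 <= n)%nat -> 0 <= r -> 0 <= a ->
  (forall k, (k = 0 \/ k = 2)%nat -> a <= zeta k r <= b) ->
  sqrt a ^ n * INR n * r ^ (n - 1) <= alpha_integrand n r <= sqrt b ^ n * INR n * r ^ (n - 1).
Proof.
  intros Hn Hr Ha Hz; unfold alpha_integrand.
  destruct (Hz 0%nat) as [Ha0 Hb0]; auto; destruct (Hz 2%nat) as [Ha2 Hb2]; auto.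
  assert (Hs : forall c d, c <= d -> sqrt c <= sqrt d) by (intros; apply sqrt_le_1_alt; auto).
  destruct n as [| m]; [lia |]; replace (S m - 1)%nat with m by lia.
  set (P := INR (S m) * r ^ m).
  assert (HP : 0 <= P) by (apply Rmult_le_pos; [apply pos_INR | apply pow_le; lra]).
  replace (sqrt a ^ S m * INR (S m) * r ^ m) with (sqrt a ^ m * sqrt a * P) by (unfold P; simpl; ring).
  replace (sqrt b ^ S m * INR (S m) * r ^ m) with (sqrt b ^ m * sqrt b * P) by (unfold P; simpl; ring).
  replace (sqrt (zeta 0 r) ^ m * sqrt (zeta 2 r) * INR (S m) * r ^ m)
    with (sqrt (zeta 0 r) ^ m * sqrt (zeta 2 r) * P) by (unfold P; ring).
  split; apply Rmult_le_compat_r; auto;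
    apply Rmult_le_compat; auto using pow_le, sqrt_pos; apply pow_incr; auto using sqrt_pos.
Qed.

Lemma RInt_alpha_integrand_bounds n t a b : (1 <= n)%nat -> 0 <= t -> 0 <= a ->
  (forall k r, (k = 0 \/ k = 2)%nat -> 0 <= r <= t -> a <= zeta k r <= b) ->
  (sqrt a * t) ^ n <= RInt (alpha_integrand n) 0 t <= (sqrt b * t) ^ n.
Proof.
  intros Hn Ht Ha Hz.
  assert (Hex : forall c, ex_RInt (fun r => sqrt c ^ n * INR n * r ^ (n - 1)) 0 t).
  { intros c; apply ex_RInt_continuous_R; intros.
    apply continuous_mult_R; [apply continuous_const | apply continuous_pow_R, continuous_id]. }
  rewrite !Rpow_mult_distr, <- !RInt_pow_pred by auto.
  split; apply RInt_le; auto using ex_RInt_alpha_integrand; intros r Hr;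
    apply (alpha_integrand_between n r a b); auto; try lra; intros; apply Hz; auto; lra.
Qed.

Definition zeta_tail_const := phi 0 * xi_moment 2 / A0 + phi 0 * xi_moment 4 / A2.

Lemma zeta_tail_const_nonneg : 0 <= zeta_tail_const.
Proof.
  assert (H2 := xi_moment_pos 2); assert (H4 := xi_moment_pos 4); assert (Hp := phi_pos 0).
  assert (H0 := A0_pos); assert (HA2 := A2_pos).
  unfold zeta_tail_const; apply Rplus_le_le_0_compat; apply Rdiv_le_0_compat; nra.
Qed.

Lemma zeta02_tail_bounds r y : 0 < r -> zeta_tail_const / r ^ 2 <= y ->
  A0 * (1 - y) <= r * zeta 0 r <= A0 /\ A2 * (1 - y) <= r ^ 3 * zeta 2 r <= A2.
Proof.
  intros Hr Hy.
  assert (H0 := zeta_tail_bounds 0 r even_0 Hr); assert (H2 := zeta_tail_bounds 2 r even_2 Hr).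
  rewrite <- A0_eq in H0; rewrite <- A2_eq in H2.
  change (r ^ (0 + 1)) with (r ^ 1) in H0; change (xi_moment (0 + 2)) with (xi_moment 2) in H0.
  change (r ^ (2 + 1)) with (r ^ 3) in H2; change (xi_moment (2 + 2)) with (xi_moment 4) in H2.
  rewrite pow_1 in H0.
  assert (HA0 := A0_pos); assert (HA2 := A2_pos).
  assert (Hr2 : 0 < / r ^ 2) by (apply Rinv_0_lt_compat, pow_lt, Hr).
  assert (Hp := phi_pos 0); assert (Hm2 := xi_moment_pos 2); assert (Hm4 := xi_moment_pos 4).
  assert (Hc2 : 0 <= phi 0 * xi_moment 2 / A0) by (apply Rdiv_le_0_compat; nra).
  assert (Hc4 : 0 <= phi 0 * xi_moment 4 / A2) by (apply Rdiv_le_0_compat; nra).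
  assert (Hy0 : phi 0 * xi_moment 2 / A0 / r ^ 2 <= y /\ phi 0 * xi_moment 4 / A2 / r ^ 2 <= y).
  { unfold zeta_tail_const, Rdiv in *; split; eapply Rle_trans; try exact Hy;
      apply Rmult_le_compat_r; lra. }
  replace (phi 0 * xi_moment 2 / r ^ 2) with (A0 * (phi 0 * xi_moment 2 / A0 / r ^ 2)) in H0
    by (field; nonzero).
  replace (phi 0 * xi_moment 4 / r ^ 2) with (A2 * (phi 0 * xi_moment 4 / A2 / r ^ 2)) in H2
    by (field; nonzero).
  destruct Hy0 as [Hy0 Hy2].
  assert (A0 * (phi 0 * xi_moment 2 / A0 / r ^ 2) <= A0 * y) by (apply Rmult_le_compat_l; lra).
  assert (A2 * (phi 0 * xi_moment 4 / A2 / r ^ 2) <= A2 * y) by (apply Rmult_le_compat_l; lra).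
  split; split; nra.
Qed.

Definition alpha_const (n : nat) := sqrt A0 ^ (n - 1) * sqrt A2 * INR n.

(* Isolates [r zeta_0 r] and [r^3 zeta_2 r], which tend to [A0] and [A2]. *)
Lemma alpha_integrand_rescaled n r : (2 <= n)%nat -> 0 < r ->
  alpha_integrand n r =
  sqrt (r * zeta 0 r) ^ (n - 1) * sqrt (r ^ 3 * zeta 2 r) * INR n * (sqrt r ^ (n - 2) / r).
Proof.
  intros Hn Hr; unfold alpha_integrand.
  assert (Hs : 0 < sqrt r) by (apply sqrt_lt_R0, Hr).
  assert (Hr3 : sqrt (r ^ 3) = r * sqrt r).
  { replace (r ^ 3) with ((r * r) * r) by ring; rewrite sqrt_mult, sqrt_square; nra. }
  assert (Hz0 := zeta_pos 0 r even_0); assert (Hz2 := zeta_pos 2 r even_2).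
  assert (E0 : sqrt (r * zeta 0 r) = sqrt r * sqrt (zeta 0 r)) by (apply sqrt_mult; lra).
  assert (E2 : sqrt (r ^ 3 * zeta 2 r) = r * sqrt r * sqrt (zeta 2 r)).
  { rewrite sqrt_mult, Hr3; [reflexivity | apply pow_le |]; lra. }
  rewrite E0, E2, Rpow_mult_distr.
  destruct n as [| [| m]]; [lia | lia |]; replace (S (S m) - 1)%nat with (S m) by lia;
    replace (S (S m) - 2)%nat with m by lia.
  replace (r ^ S m) with (sqrt r ^ S m * sqrt r ^ S m) by (rewrite <- Rpow_mult_distr, sqrt_sqrt; lra).
  simpl; field; nonzero.
Qed.

Lemma bernoulli_ineq (x : R) (n : nat) : 0 <= x <= 1 -> 1 - INR n * x <= (1 - x) ^ n.
Proof.
  intros Hx; induction n as [| n IH]; [simpl; lra |].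
  rewrite S_INR; simpl.
  assert (0 <= (1 - x) ^ n) by (apply pow_le; lra); assert (Hn := pos_INR n).
  assert ((1 - x) * (1 - INR n * x) <= (1 - x) * (1 - x) ^ n) by (apply Rmult_le_compat_l; lra).
  assert (0 <= INR n * x * x) by (apply Rmult_le_pos; [apply Rmult_le_pos |]; lra).
  nra.
Qed.

Lemma bernoulli_sqrt (y : R) (n : nat) : 0 <= y <= 1 -> 1 - INR n * y <= sqrt (1 - y) ^ n.
Proof.
  intros Hy; eapply Rle_trans; [apply bernoulli_ineq, Hy |]; apply pow_incr; split; [lra |].
  assert (H1 : sqrt (1 - y) <= sqrt 1) by (apply sqrt_le_1_alt; lra); rewrite sqrt_1 in H1.
  assert (H2 := sqrt_pos (1 - y)).
  assert (H3 : sqrt (1 - y) * sqrt (1 - y) = 1 - y) by (apply sqrt_sqrt; lra).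
  nra.
Qed.

Lemma alpha_integrand_tail_le n r : (2 <= n)%nat -> 0 < r ->
  alpha_integrand n r <= alpha_const n * (sqrt r ^ (n - 2) / r).
Proof.
  intros Hn Hr.
  destruct (zeta02_tail_bounds r (zeta_tail_const / r ^ 2) Hr (Rle_refl _)) as [[_ U0] [_ U2]].
  rewrite alpha_integrand_rescaled by auto; unfold alpha_const.
  assert (HP : 0 <= INR n * (sqrt r ^ (n - 2) / r)).
  { apply Rmult_le_pos; [apply pos_INR | apply Rdiv_le_0_compat; [apply pow_le, sqrt_pos | exact Hr]]. }
  rewrite !Rmult_assoc; apply Rmult_le_compat.
  - apply pow_le, sqrt_pos.
  - apply Rmult_le_pos; [apply sqrt_pos | exact HP].
  - apply pow_incr; split; [apply sqrt_pos | apply sqrt_le_1_alt; lra].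
  - apply Rmult_le_compat_r; [exact HP | apply sqrt_le_1_alt; lra].
Qed.

Lemma alpha_integrand_tail_ge n r y : (2 <= n)%nat -> 0 < r ->
  zeta_tail_const / r ^ 2 <= y <= 1 ->
  (1 - INR n * y) * (alpha_const n * (sqrt r ^ (n - 2) / r)) <= alpha_integrand n r.
Proof.
  intros Hn Hr [Hy Hy1].
  assert (Hy0 : 0 <= y).
  { eapply Rle_trans; [| exact Hy]; apply Rdiv_le_0_compat;
    [apply zeta_tail_const_nonneg | apply pow_lt, Hr]. }
  destruct (zeta02_tail_bounds r y Hr Hy) as [[L0 _] [L2 _]].
  assert (HA0 := A0_pos); assert (HA2 := A2_pos).
  rewrite alpha_integrand_rescaled by auto; unfold alpha_const.
  set (P := INR n * (sqrt r ^ (n - 2) / r)).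
  assert (HP : 0 <= P).
  { apply Rmult_le_pos; [apply pos_INR | apply Rdiv_le_0_compat; [apply pow_le, sqrt_pos | exact Hr]]. }
  replace (sqrt (r * zeta 0 r) ^ (n - 1) * sqrt (r ^ 3 * zeta 2 r) * INR n * (sqrt r ^ (n - 2) / r))
    with (sqrt (r * zeta 0 r) ^ (n - 1) * sqrt (r ^ 3 * zeta 2 r) * P) by (unfold P; ring).
  replace (sqrt A0 ^ (n - 1) * sqrt A2 * INR n * (sqrt r ^ (n - 2) / r))
    with (sqrt A0 ^ (n - 1) * sqrt A2 * P) by (unfold P; ring).
  clearbody P.
  assert (Hb := bernoulli_sqrt y n (conj Hy0 Hy1)).
  replace n with (S (n - 1)) in Hb at 2 by lia; rewrite <- tech_pow_Rmult in Hb.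
  apply Rle_trans with (sqrt (1 - y) ^ (n - 1) * sqrt (1 - y) * (sqrt A0 ^ (n - 1) * sqrt A2 * P)).
  - apply Rmult_le_compat_r; [repeat apply Rmult_le_pos; auto using pow_le, sqrt_pos | lra].
  - replace (sqrt (1 - y) ^ (n - 1) * sqrt (1 - y) * (sqrt A0 ^ (n - 1) * sqrt A2 * P))
      with (sqrt (A0 * (1 - y)) ^ (n - 1) * sqrt (A2 * (1 - y)) * P)
      by (rewrite !sqrt_mult, Rpow_mult_distr by lra; ring).
    apply Rmult_le_compat_r; auto; apply Rmult_le_compat; auto using pow_le, sqrt_pos.
    + apply pow_incr; split; [apply sqrt_pos | apply sqrt_le_1_alt; lra].
    + apply sqrt_le_1_alt; lra.
Qed.

Lemma sqrt_pow_div_continuous k r : 0 < r -> continuous (fun r => sqrt r ^ k / r) r.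
Proof.
  intros Hr; apply continuous_mult_R; [apply continuous_pow_R, continuous_sqrt |].
  apply continuous_Rinv_comp; [apply continuous_id | lra].
Qed.

Lemma ex_RInt_sqrt_pow_div k a b : 0 < a -> a <= b -> ex_RInt (fun r => sqrt r ^ k / r) a b.
Proof.
  intros Ha Hab; apply ex_RInt_continuous_R; intros z Hz.
  rewrite Rmin_left, Rmax_right in Hz by lra; apply sqrt_pow_div_continuous; lra.
Qed.

Lemma RInt_sqrt_pow_div k a b : (1 <= k)%nat -> 0 < a -> a <= b ->
  RInt (fun r => sqrt r ^ k / r) a b = 2 / INR k * (sqrt b ^ k - sqrt a ^ k).
Proof.
  intros Hk Ha Hab; assert (HK : 0 < INR k) by (apply lt_0_INR; lia).
  rewrite (is_RInt_derive_R (fun r => 2 / INR k * sqrt r ^ k));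
    [match goal with |- ?u = ?v => change (@eq R u v) end; ring | |].
  - intros x Hx; rewrite Rmin_left, Rmax_right in Hx by lra.
    assert (Hs : 0 < sqrt x) by (apply sqrt_lt_R0; lra).
    auto_derive; [lra |].
    destruct k as [| k']; [lia |]; simpl pred.
    assert (E : x = sqrt x * sqrt x) by (rewrite sqrt_sqrt; lra).
    set (s := sqrt x) in *; clearbody s; rewrite E.
    change (s ^ S k') with (s * s ^ k'); field; nonzero.
  - intros x Hx; rewrite Rmin_left, Rmax_right in Hx by lra; apply sqrt_pow_div_continuous; lra.
Qed.

Lemma RInt_sqrt_pow0_div a b : 0 < a -> a <= b -> RInt (fun r => sqrt r ^ 0 / r) a b = ln b - ln a.
Proof.
  intros Ha Hab; apply is_RInt_derive_R.
  - intros x Hx; rewrite Rmin_left, Rmax_right in Hx by lra; auto_derive; [lra | simpl; field; lra].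
  - intros x Hx; rewrite Rmin_left, Rmax_right in Hx by lra; apply sqrt_pow_div_continuous; lra.
Qed.

Lemma RInt_alpha_integrand_tail_le n a b : (2 <= n)%nat -> 0 < a -> a <= b ->
  RInt (alpha_integrand n) a b <= alpha_const n * RInt (fun r => sqrt r ^ (n - 2) / r) a b.
Proof.
  intros Hn Ha Hab; rewrite <- RInt_scal_R by (apply ex_RInt_sqrt_pow_div; auto).
  apply RInt_le; auto using ex_RInt_alpha_integrand.
  - apply ex_RInt_continuous_R; intros z Hz; rewrite Rmin_left, Rmax_right in Hz by lra.
    apply continuous_mult_R; [apply continuous_const | apply sqrt_pow_div_continuous; lra].
  - intros r Hr; apply alpha_integrand_tail_le; auto; lra.
Qed.

Lemma RInt_alpha_integrand_tail_ge n a b y : (2 <= n)%nat -> 0 < a -> a <= b ->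
  zeta_tail_const / a ^ 2 <= y <= 1 ->
  (1 - INR n * y) * alpha_const n * RInt (fun r => sqrt r ^ (n - 2) / r) a b
  <= RInt (alpha_integrand n) a b.
Proof.
  intros Hn Ha Hab [Hy Hy1]; rewrite <- RInt_scal_R by (apply ex_RInt_sqrt_pow_div; auto).
  apply RInt_le; auto using ex_RInt_alpha_integrand.
  - apply ex_RInt_continuous_R; intros z Hz; rewrite Rmin_left, Rmax_right in Hz by lra.
    apply continuous_mult_R; [apply continuous_const | apply sqrt_pow_div_continuous; lra].
  - intros r Hr; rewrite Rmult_assoc; apply alpha_integrand_tail_ge; auto; [lra | split; auto].
    eapply Rle_trans; [| exact Hy]; unfold Rdiv; apply Rmult_le_compat_l; [apply zeta_tail_const_nonneg |].
    apply Rinv_le_contravar; [apply pow_lt; lra | apply pow_incr; lra].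
Qed.

(** * Asymptotics of [alpha] *)

Lemma Rabs_div_sub1_lt a T lo hi eps : 0 < T -> lo * T <= a -> a <= hi * T ->
  1 - eps < lo -> hi < 1 + eps -> Rabs (a / T - 1) < eps.
Proof.
  intros HT Hlo Hhi Hl Hh.
  assert (lo <= a / T <= hi).
  { split; apply Rmult_le_reg_r with T; auto; unfold Rdiv; rewrite Rmult_assoc, Rinv_l; lra. }
  apply Rabs_lt_between; lra.
Qed.

Lemma sqrt_pow_1_plus_le x n : 0 <= x <= 1 -> INR n * x <= / 2 ->
  sqrt (1 + x) ^ n <= 1 + 2 * INR n * x.
Proof.
  intros Hx Hnx.
  assert (H1 : sqrt (1 + x) ^ n <= (1 + x) ^ n).
  { apply pow_incr; split; [apply sqrt_pos |].
    assert (sqrt 1 <= sqrt (1 + x)) by (apply sqrt_le_1_alt; lra); rewrite sqrt_1 in *.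
    assert (sqrt (1 + x) * sqrt (1 + x) = 1 + x) by (apply sqrt_sqrt; lra); nra. }
  assert (H2 : (1 + x) ^ n * (1 - INR n * x) <= 1).
  { apply Rle_trans with ((1 + x) ^ n * (1 - x) ^ n).
    - apply Rmult_le_compat_l; [apply pow_le; lra | apply bernoulli_ineq, Hx].
    - rewrite <- Rpow_mult_distr; apply Rle_trans with (1 ^ n); [apply pow_incr; nra | rewrite pow1; lra]. }
  assert (H3 : 0 <= (1 + x) ^ n) by (apply pow_le; lra).
  assert (H4 : 0 <= INR n * x) by (apply Rmult_le_pos; [apply pos_INR | lra]).
  nra.
Qed.

Lemma sqrt_mult_pow a b n : 0 <= a -> 0 <= b -> (sqrt (a * b)) ^ n = sqrt a ^ n * sqrt b ^ n.
Proof. intros; rewrite sqrt_mult, Rpow_mult_distr; auto. Qed.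

Lemma alpha_bounds_small n snr x : (1 <= n)%nat -> 0 < snr -> 0 <= x <= 1 -> INR n * x <= / 2 ->
  (forall k r, (k = 0 \/ k = 2)%nat -> 0 <= r <= sqrt snr ->
     2 / PI * (1 - x) <= zeta k r <= 2 / PI * (1 + x)) ->
  (1 - INR n * x) * sqrt (2 / PI * snr) ^ n <= alpha snr n
  <= (1 + 2 * INR n * x) * sqrt (2 / PI * snr) ^ n.
Proof.
  intros Hn Hs Hx Hnx Hz; set (c := 2 / PI) in *.
  assert (Hc : 0 < c) by (unfold c; apply Rdiv_lt_0_compat; [lra | apply PI_RGT_0]).
  destruct (RInt_alpha_integrand_bounds n (sqrt snr) (c * (1 - x)) (c * (1 + x)) Hn (sqrt_pos snr))
    as [Hlo Hhi]; auto; [nra |]; rewrite <- alpha_eq in Hlo, Hhi.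
  rewrite !Rpow_mult_distr, !sqrt_mult_pow in Hlo, Hhi by lra.
  rewrite sqrt_mult_pow by lra.
  assert (HT : 0 < sqrt c ^ n * sqrt snr ^ n) by (apply Rmult_lt_0_compat; apply pow_lt, sqrt_lt_R0; lra).
  split.
  - apply Rle_trans with (sqrt (1 - x) ^ n * (sqrt c ^ n * sqrt snr ^ n)); [| lra].
    apply Rmult_le_compat_r; [lra | apply bernoulli_sqrt; lra].
  - apply Rle_trans with (sqrt (1 + x) ^ n * (sqrt c ^ n * sqrt snr ^ n)); [lra |].
    apply Rmult_le_compat_r; [lra | apply sqrt_pow_1_plus_le; lra].
Qed.

Lemma alpha_small_snr : forall eps : R, 0 < eps -> exists delta : R, 0 < delta /\
  forall (n : nat) (snr : R), (1 <= n)%nat -> 0 < snr -> INR n * snr < delta ->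
    Rabs (alpha snr n / (sqrt (2 / PI * snr)) ^ n - 1) < eps.
Proof.
  intros eps He; destruct zeta_near0 as [Cz HCz].
  assert (HCz0 : 0 <= Cz).
  { specialize (HCz 0%nat 1 (or_introl eq_refl)); rewrite pow1, Rmult_1_r in HCz.
    eapply Rle_trans; [apply Rabs_pos | exact HCz]. }
  set (c := 2 / PI); assert (Hc : 0 < c) by (unfold c; apply Rdiv_lt_0_compat; [lra | apply PI_RGT_0]).
  set (eta := Rmin (eps / 4) (/ 2)).
  assert (Heta0 : 0 < eta) by (apply Rmin_glb_lt; lra).
  assert (Heta1 : eta <= eps / 4) by apply Rmin_l; assert (Heta2 : eta <= / 2) by apply Rmin_r.
  exists (eta * c / (Cz + 1)); split; [apply Rdiv_lt_0_compat; [apply Rmult_lt_0_compat |]; lra |].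
  intros n snr Hn Hs Hd.
  set (x := Cz * snr / c).
  assert (HnR : 1 <= INR n) by (apply (le_INR 1); auto).
  assert (Hx0 : 0 <= x) by (unfold x; apply Rdiv_le_0_compat; [apply Rmult_le_pos |]; lra).
  assert (Hnx : INR n * x <= eta).
  { assert (H1 : INR n * x <= (Cz + 1) / c * (INR n * snr)).
    { assert (0 <= INR n * snr / c) by (apply Rdiv_le_0_compat; nra).
      unfold x; replace ((Cz + 1) / c * (INR n * snr)) with (INR n * (Cz * snr / c) + INR n * snr / c)
        by (field; lra); lra. }
    assert (H2 : (Cz + 1) / c * (INR n * snr) <= (Cz + 1) / c * (eta * c / (Cz + 1))).
    { apply Rmult_le_compat_l; [apply Rdiv_le_0_compat |]; lra. }
    replace ((Cz + 1) / c * (eta * c / (Cz + 1))) with eta in H2 by (field; lra); lra. }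
  assert (Hx1 : x <= 1) by nra.
  destruct (alpha_bounds_small n snr x Hn Hs (conj Hx0 Hx1) ltac:(lra)) as [Hlo Hhi].
  - intros k r Hk Hr; specialize (HCz k r Hk); fold c in HCz |- *.
    assert (Hr2 : r ^ 2 <= snr) by (rewrite <- (pow2_sqrt snr) by lra; apply pow_incr; lra).
    assert (Cz * r ^ 2 <= c * x).
    { unfold x; replace (c * (Cz * snr / c)) with (Cz * snr)
      by (field; lra); apply Rmult_le_compat_l; lra. }
    apply Rabs_le_between in HCz; lra.
  - apply Rabs_div_sub1_lt with (1 - INR n * x) (1 + 2 * INR n * x); auto; try lra.
    apply pow_lt, sqrt_lt_R0; fold c; nra.
Qed.

Lemma alpha_const_pos n : (1 <= n)%nat -> 0 < alpha_const n.
Proof.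
  intros Hn; unfold alpha_const.
  assert (0 < INR n) by (apply lt_0_INR; lia).
  apply Rmult_lt_0_compat; [apply Rmult_lt_0_compat |]; auto.
  - apply pow_lt, sqrt_lt_R0, A0_pos.
  - apply sqrt_lt_R0, A2_pos.
Qed.

Lemma RInt_alpha_integrand_head_le n t B : (1 <= n)%nat -> 0 <= t -> (forall u, xi u <= B) ->
  RInt (alpha_integrand n) 0 t <= (sqrt B * t) ^ n.
Proof.
  intros Hn Ht HB; apply (RInt_alpha_integrand_bounds n t 0 B); auto; [lra |].
  intros k r Hk _; split; [left; apply zeta_pos, even_of_0_or_2, Hk | apply zeta_le; auto].
Qed.

Definition alpha_main (n : nat) (snr : R) :=
  alpha_const n * (2 / INR (n - 2)) * sqrt (sqrt snr) ^ (n - 2).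

Lemma alpha_main_pos n snr : (3 <= n)%nat -> 0 < snr -> 0 < alpha_main n snr.
Proof.
  intros Hn Hs; apply Rmult_lt_0_compat; [apply Rmult_lt_0_compat; [apply alpha_const_pos; lia |] |].
  - apply Rdiv_lt_0_compat; [lra | apply lt_0_INR; lia].
  - apply pow_lt, sqrt_lt_R0, sqrt_lt_R0, Hs.
Qed.

Lemma Rpower_quarter snr k : 0 < snr -> Rpower snr (INR k / 4) = sqrt (sqrt snr) ^ k.
Proof.
  intros Hs; assert (Hs1 : 0 < sqrt snr) by (apply sqrt_lt_R0, Hs).
  replace (INR k / 4) with (/ 2 * / 2 * INR k) by field.
  rewrite <- !Rpower_mult, (Rpower_sqrt snr), (Rpower_sqrt (sqrt snr)) by auto.
  apply Rpower_pow, sqrt_lt_R0, Hs1.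
Qed.

Lemma alpha_main_eq n snr : (3 <= n)%nat -> 0 < snr ->
  2 * INR n / (INR n - 2) * sqrt A0 ^ (n - 1) * sqrt A2 * Rpower snr ((INR n - 2) / 4)
  = alpha_main n snr.
Proof.
  intros Hn Hs; replace (INR n - 2) with (INR (n - 2)) by (rewrite minus_INR by lia; simpl; lra).
  rewrite Rpower_quarter by auto; unfold alpha_main, alpha_const; field.
  apply Rgt_not_eq, lt_0_INR; lia.
Qed.

(* With [B] a bound of [xi] (hence of [zeta_0] and [zeta_2]), [t] is chosen so that the
   integral over [[0, t]] is at most [sqrt A0 ^ n]. *)
Lemma alpha_le_main n snr : (3 <= n)%nat -> 1 <= sqrt snr ->
  alpha snr n <= sqrt A0 ^ n + alpha_main n snr.
Proof.
  intros Hn Hs.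
  destruct xi_bounded as [B [HB HxB]]; assert (HA0 := A0_pos).
  set (t := Rmin 1 (sqrt (A0 / B))).
  assert (Ht : 0 < t <= 1).
  { split; [apply Rmin_glb_lt; [lra | apply sqrt_lt_R0, Rdiv_lt_0_compat; lra] | apply Rmin_l]. }
  assert (HBt : sqrt B * t <= sqrt A0).
  { apply Rle_trans
    with (sqrt B * sqrt (A0 / B)); [apply Rmult_le_compat_l; [apply sqrt_pos | apply Rmin_r] |].
    rewrite <- sqrt_mult by (try apply Rdiv_le_0_compat; lra); right; f_equal; field; lra. }
  rewrite alpha_eq, <- (RInt_alpha_integrand_Chasles n t).
  assert (H1 : RInt (alpha_integrand n) 0 t <= sqrt A0 ^ n).
  { eapply Rle_trans; [apply RInt_alpha_integrand_head_le; eauto; lia || lra |].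
    apply pow_incr; split; auto; apply Rmult_le_pos; [apply sqrt_pos | lra]. }
  assert (H2 := RInt_alpha_integrand_tail_le n t (sqrt snr) ltac:(lia) ltac:(lra) ltac:(lra)).
  rewrite RInt_sqrt_pow_div in H2 by (lia || lra).
  assert (HC := alpha_const_pos n ltac:(lia)).
  assert (0 < 2 / INR (n - 2)) by (apply Rdiv_lt_0_compat; [lra | apply lt_0_INR; lia]).
  assert (0 <= sqrt t ^ (n - 2)) by (apply pow_le, sqrt_pos).
  assert (0 <= alpha_const n * (2 / INR (n - 2)) * sqrt t ^ (n - 2))
    by (apply Rmult_le_pos; [apply Rmult_le_pos |]; lra).
  unfold alpha_main; nra.
Qed.

Lemma alpha_ge_main n snr ts y : (3 <= n)%nat -> 0 < snr -> 0 < ts <= 1 ->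
  zeta_tail_const / (ts ^ 4 * snr) <= y <= 1 ->
  (1 - INR n * y) * (1 - ts) * alpha_main n snr <= alpha snr n.
Proof.
  intros Hn Hs Hts [Hy Hy1]; set (r0 := ts ^ 2 * sqrt snr).
  assert (Hsq : 0 < sqrt snr) by (apply sqrt_lt_R0, Hs).
  assert (Hts2 : 0 < ts ^ 2 <= 1) by (split; [apply pow_lt; lra | simpl; nra]).
  assert (Hr0 : 0 < r0 <= sqrt snr) by (unfold r0; split; nra).
  assert (Hsr0 : sqrt r0 = ts * sqrt (sqrt snr)).
  { unfold r0; rewrite sqrt_mult, sqrt_pow2 by (try apply pow_le; lra); reflexivity. }
  assert (Hy' : zeta_tail_const / r0 ^ 2 <= y).
  { unfold r0; rewrite Rpow_mult_distr, pow2_sqrt, <- pow_mult by lra; exact Hy. }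
  assert (Htsk : ts ^ (n - 2) <= ts).
  { replace (n - 2)%nat with (S (n - 3)) by lia; simpl.
    assert (ts ^ (n - 3) <= 1).
    { apply Rle_trans with (1 ^ (n - 3)); [apply pow_incr; lra | rewrite pow1; lra]. }
    assert (0 <= ts ^ (n - 3)) by (apply pow_le; lra); nra. }
  rewrite alpha_eq, <- (RInt_alpha_integrand_Chasles n r0).
  assert (H0 : 0 <= RInt (alpha_integrand n) 0 r0).
  { apply RInt_ge_0; [lra | apply ex_RInt_alpha_integrand | intros; apply alpha_integrand_nonneg; lra]. }
  assert (H := RInt_alpha_integrand_tail_ge n r0 (sqrt snr) y ltac:(lia) ltac:(lra) ltac:(lra)
                 (conj Hy' Hy1)).
  rewrite RInt_sqrt_pow_div, Hsr0, Rpow_mult_distr in H by (lia || lra).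
  assert (HM := alpha_main_pos n snr Hn Hs).
  replace ((1 - INR n * y) * alpha_const n * (2 / INR (n - 2) * (sqrt (sqrt snr) ^ (n - 2)
            - ts ^ (n - 2) * sqrt (sqrt snr) ^ (n - 2))))
    with ((1 - INR n * y) * (1 - ts ^ (n - 2)) * alpha_main n snr) in H by (unfold alpha_main; ring).
  assert (H1 : 0 <= RInt (alpha_integrand n) r0 (sqrt snr)).
  { apply RInt_ge_0; [lra | apply ex_RInt_alpha_integrand | intros; apply alpha_integrand_nonneg; lra]. }
  destruct (Rle_or_lt 0 (1 - INR n * y)) as [Hp | Hneg].
  - assert ((1 - INR n * y) * (1 - ts) <= (1 - INR n * y) * (1 - ts ^ (n - 2)))
      by (apply Rmult_le_compat_l; lra).
    assert ((1 - INR n * y) * (1 - ts) * alpha_main n snr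
            <= (1 - INR n * y) * (1 - ts ^ (n - 2)) * alpha_main n snr) by (apply Rmult_le_compat_r; lra).
    lra.
  - assert ((1 - INR n * y) * (1 - ts) * alpha_main n snr <= 0); [| lra].
    apply Rmult_le_0_r; [| lra]; apply Rmult_le_0_r; lra.
Qed.

Lemma sqrt_A0_pow_lt_alpha_main n e snr : (3 <= n)%nat -> 0 < e -> 1 <= sqrt (sqrt snr) ->
  sqrt A0 / (2 * sqrt A2 * e) < sqrt (sqrt snr) -> sqrt A0 ^ n < e * alpha_main n snr.
Proof.
  intros Hn He HQ1 HQ; set (Q := sqrt (sqrt snr)) in *.
  assert (Ha0 : 0 < sqrt A0) by apply sqrt_lt_R0, A0_pos.
  assert (Ha2 : 0 < sqrt A2) by apply sqrt_lt_R0, A2_pos.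
  assert (Hk : 0 < INR (n - 2)) by (apply lt_0_INR; lia).
  assert (Hnk : INR (n - 2) <= INR n) by (apply le_INR; lia).
  assert (HQk : Q <= Q ^ (n - 2)) by (rewrite <- (pow_1 Q) at 1; apply Rle_pow; lia || lra).
  assert (Ha0' : sqrt A0 < 2 * sqrt A2 * e * Q).
  { apply Rmult_lt_reg_r with (/ (2 * sqrt A2 * e)); [apply Rinv_0_lt_compat; nra |].
    replace (2 * sqrt A2 * e * Q * / (2 * sqrt A2 * e)) with Q by (field; nonzero; nra); exact HQ. }
  assert (Hratio : 1 <= INR n / INR (n - 2)).
  { apply Rmult_le_reg_r with (INR (n - 2)); auto; unfold Rdiv; rewrite Rmult_assoc, Rinv_l; lra. }
  unfold alpha_main, alpha_const; fold Q.
  replace n with (S (n - 1)) at 1 by lia; rewrite <- tech_pow_Rmult.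
  replace (e * (sqrt A0 ^ (n - 1) * sqrt A2 * INR n * (2 / INR (n - 2)) * Q ^ (n - 2)))
    with (sqrt A0 ^ (n - 1) * (2 * sqrt A2 * e * (INR n / INR (n - 2) * Q ^ (n - 2)))) by (field; lra).
  rewrite (Rmult_comm (sqrt A0)); apply Rmult_lt_compat_l; [apply pow_lt, Ha0 |].
  apply Rlt_le_trans with (2 * sqrt A2 * e * Q); auto.
  apply Rmult_le_compat_l; [nra |].
  apply Rle_trans with (1 * Q); [lra |]; apply Rmult_le_compat; lra.
Qed.

Lemma tail_error_le n snr e ts : (1 <= n)%nat -> 0 < snr -> 0 < e -> 0 < ts ->
  4 * zeta_tail_const / (e * ts ^ 4) < snr / INR n ->
  INR n * (zeta_tail_const / (ts ^ 4 * snr)) <= e / 4.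
Proof.
  intros Hn Hs He Hts HM; assert (HnR : 0 < INR n) by (apply lt_0_INR; lia).
  assert (Hts4 : 0 < ts ^ 4) by (apply pow_lt, Hts).
  assert (Hztc := zeta_tail_const_nonneg).
  replace (INR n * (zeta_tail_const / (ts ^ 4 * snr))) with (zeta_tail_const / ts ^ 4 / (snr / INR n))
    by (field; nonzero).
  apply Rmult_le_reg_r with (snr / INR n); [apply Rdiv_lt_0_compat; lra |].
  unfold Rdiv at 1; rewrite Rmult_assoc, Rinv_l by (apply Rgt_not_eq, Rdiv_lt_0_compat; lra).
  replace (zeta_tail_const / ts ^ 4 * 1) with (e / 4 * (4 * zeta_tail_const / (e * ts ^ 4)))
    by (field; nonzero).
  apply Rmult_le_compat_l; lra.
Qed.

Lemma lt_sqrt_sqrt c x : 0 <= c -> c ^ 4 < x -> c < sqrt (sqrt x).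
Proof.
  intros Hc Hx.
  assert (E : sqrt (sqrt (c ^ 4)) = c).
  { replace (c ^ 4) with ((c ^ 2) ^ 2) by ring.
    rewrite sqrt_pow2, sqrt_pow2 by (try apply pow_le; lra); reflexivity. }
  rewrite <- E at 1.
  apply sqrt_lt_1_alt; split; [apply sqrt_pos |].
  apply sqrt_lt_1_alt; split; [apply pow_le, Hc | exact Hx].
Qed.

Lemma alpha_large_snr_ge3 : forall eps : R, 0 < eps -> exists M : R, forall (n : nat) (snr : R),
  (3 <= n)%nat -> 0 < snr -> M < snr / INR n ->
  Rabs (alpha snr n /
        (2 * INR n / (INR n - 2) * sqrt A0 ^ (n - 1) * sqrt A2 * Rpower snr ((INR n - 2) / 4)) - 1) < eps.
Proof.
  intros eps He.
  set (e := Rmin eps 1); assert (He0 : 0 < e) by (apply Rmin_glb_lt; lra).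
  assert (He1 : e <= eps) by apply Rmin_l; assert (He2 : e <= 1) by apply Rmin_r.
  set (W := sqrt A0 / (2 * sqrt A2 * e) + 1).
  assert (HW : 1 < W).
  { assert (0 < sqrt A0 / (2 * sqrt A2 * e)); [| unfold W; lra].
    assert (0 < sqrt A2) by apply sqrt_lt_R0, A2_pos.
    apply Rdiv_lt_0_compat; [apply sqrt_lt_R0, A0_pos | nra]. }
  set (ts := e / 4); assert (Hztc := zeta_tail_const_nonneg).
  exists (Rmax (W ^ 4) (4 * zeta_tail_const / (e * ts ^ 4))); intros n snr Hn Hs HM.
  assert (HM1 := Rle_lt_trans _ _ _ (Rmax_l _ _) HM); assert (HM2 := Rle_lt_trans _ _ _ (Rmax_r _ _) HM).
  assert (HnR : 3 <= INR n) by (apply (le_INR 3) in Hn; simpl in Hn; lra).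
  assert (Hsn : snr / INR n <= snr).
  { apply Rmult_le_reg_r with (INR n); [lra |]; unfold Rdiv; rewrite Rmult_assoc, Rinv_l; nra. }
  assert (HQW : W < sqrt (sqrt snr)) by (apply lt_sqrt_sqrt; lra).
  rewrite alpha_main_eq by auto; set (T := alpha_main n snr).
  assert (HT : 0 < T) by (apply alpha_main_pos; auto).
  assert (Hup : alpha snr n <= sqrt A0 ^ n + T).
  { apply alpha_le_main; auto.
    apply Rle_trans with (sqrt 1); [rewrite sqrt_1; lra | apply sqrt_le_1_alt].
    assert (1 < W ^ 4) by (apply Rlt_pow_R1; lia || lra); lra. }
  set (y := zeta_tail_const / (ts ^ 4 * snr)).
  assert (Hny : INR n * y <= e / 4) by (apply tail_error_le; unfold ts; auto; lia || lra).
  assert (Hy1 : y <= 1).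
  { assert (0 <= y)
    by (apply Rdiv_le_0_compat; [lra | apply Rmult_lt_0_compat; [apply pow_lt |]; unfold ts; lra]).
    assert (y <= INR n * y) by nra; lra. }
  assert (Hlow := alpha_ge_main n snr ts y Hn Hs ltac:(unfold ts; lra) (conj (Rle_refl _) Hy1)).
  assert (Hsmall := sqrt_A0_pow_lt_alpha_main n e snr Hn He0 ltac:(lra) ltac:(unfold W in HQW; lra)).
  fold T in Hlow, Hsmall.
  apply Rabs_div_sub1_lt with ((1 - e / 4) * (1 - ts)) (1 + sqrt A0 ^ n / T); auto.
  - eapply Rle_trans; [| exact Hlow]; apply Rmult_le_compat_r; [lra |].
    apply Rmult_le_compat_r; unfold ts; lra.
  - replace ((1 + sqrt A0 ^ n / T) * T) with (sqrt A0 ^ n + T) by (field; lra); exact Hup.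
  - unfold ts; nra.
  - assert (sqrt A0 ^ n / T < e); [| lra].
    apply Rmult_lt_reg_r with T; auto; unfold Rdiv; rewrite Rmult_assoc, Rinv_l; lra.
Qed.

Lemma ln_sqrt x : 0 < x -> ln (sqrt x) = ln x / 2.
Proof.
  intros Hx; assert (Hs : 0 < sqrt x) by (apply sqrt_lt_R0, Hx).
  rewrite <- (sqrt_sqrt x) at 2 by lra; rewrite ln_mult by auto; field.
Qed.

Lemma alpha_const_2 : alpha_const 2 = 2 * (sqrt A0 ^ 1 * sqrt A2).
Proof. unfold alpha_const; simpl; ring. Qed.

Lemma alpha2_le snr B : 1 <= sqrt snr -> (forall u, xi u <= B) ->
  alpha snr 2 <= B + sqrt A0 ^ 1 * sqrt A2 * ln snr.
Proof.
  intros Hs HB; rewrite alpha_eq, <- (RInt_alpha_integrand_Chasles 2 1).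
  assert (HB0 : 0 < B) by (eapply Rlt_le_trans; [apply (xi_pos 0) | apply HB]).
  assert (Hsnr : 0 < snr) by (destruct (Rle_or_lt snr 0); [rewrite sqrt_neg_0 in Hs by auto; lra | auto]).
  assert (H1 : RInt (alpha_integrand 2) 0 1 <= B).
  { eapply Rle_trans; [apply RInt_alpha_integrand_head_le; eauto; lra |].
    rewrite Rmult_1_r, pow2_sqrt; lra. }
  assert (H2 := RInt_alpha_integrand_tail_le 2 1 (sqrt snr) (le_n 2) Rlt_0_1 Hs).
  change (2 - 2)%nat with 0%nat in H2.
  rewrite RInt_sqrt_pow0_div, ln_1, ln_sqrt, alpha_const_2 in H2 by lra.
  lra.
Qed.

Lemma alpha2_ge snr R1 y : 0 < R1 <= sqrt snr -> zeta_tail_const / R1 ^ 2 <= y <= 1 ->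
  (1 - 2 * y) * (sqrt A0 ^ 1 * sqrt A2 * (ln snr - 2 * ln R1)) <= alpha snr 2.
Proof.
  intros [HR1 HR1s] Hy; rewrite alpha_eq, <- (RInt_alpha_integrand_Chasles 2 R1).
  assert (Hsnr : 0 < snr).
  { destruct (Rle_or_lt snr 0); [rewrite sqrt_neg_0 in HR1s by auto; lra | auto]. }
  assert (H0 : 0 <= RInt (alpha_integrand 2) 0 R1).
  { apply RInt_ge_0; [lra | apply ex_RInt_alpha_integrand | intros; apply alpha_integrand_nonneg; lra]. }
  assert (H := RInt_alpha_integrand_tail_ge 2 R1 (sqrt snr) y (le_n 2) HR1 HR1s Hy).
  change (2 - 2)%nat with 0%nat in H.
  rewrite RInt_sqrt_pow0_div, ln_sqrt, alpha_const_2 in H by lra.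
  replace (INR 2) with 2 in H by (simpl; ring).
  replace ((1 - 2 * y) * (sqrt A0 ^ 1 * sqrt A2 * (ln snr - 2 * ln R1)))
    with ((1 - 2 * y) * (2 * (sqrt A0 ^ 1 * sqrt A2)) * (ln snr / 2 - ln R1)) by field.
  lra.
Qed.

Lemma lt_mult_of_div_lt a b c : 0 < b -> a / b < c -> a < b * c.
Proof.
  intros Hb H; apply Rmult_lt_compat_l with (r := b) in H; auto.
  replace (b * (a / b)) with a in H by (field; lra); exact H.
Qed.

Lemma tail_radius_exists e : 0 < e ->
  exists R1, 1 <= R1 /\ 0 <= zeta_tail_const / R1 ^ 2 /\ 2 * (zeta_tail_const / R1 ^ 2) <= e / 4.
Proof.
  intros He; assert (Hztc := zeta_tail_const_nonneg).
  set (R1 := sqrt (8 * zeta_tail_const / e) + 1).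
  assert (Hs := sqrt_pos (8 * zeta_tail_const / e)).
  assert (HR1 : 0 < R1) by (unfold R1; lra); assert (HR12 : 0 < R1 ^ 2) by (apply pow_lt, HR1).
  assert (HR1b : 8 * zeta_tail_const / e <= R1 ^ 2).
  { rewrite <- (pow2_sqrt (8 * zeta_tail_const / e)) by (apply Rdiv_le_0_compat; lra).
    apply pow_incr; unfold R1; lra. }
  exists R1; split; [unfold R1; lra | split; [apply Rdiv_le_0_compat; lra |]].
  apply Rmult_le_reg_r
    with (R1 ^ 2 * (8 / e)); [apply Rmult_lt_0_compat; [lra | apply Rdiv_lt_0_compat; lra] |].
  replace (2 * (zeta_tail_const / R1 ^ 2) * (R1 ^ 2 * (8 / e))) with (2 * (8 * zeta_tail_const / e))
    by (field; lra).
  replace (e / 4 * (R1 ^ 2 * (8 / e))) with (2 * R1 ^ 2) by (field; lra); lra.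
Qed.

Lemma alpha_large_snr_2 : forall eps : R, 0 < eps -> exists M : R, forall snr : R, M < snr ->
  Rabs (alpha snr 2 / (sqrt A0 ^ 1 * sqrt A2 * ln snr) - 1) < eps.
Proof.
  intros eps He.
  set (e := Rmin eps 1); assert (He0 : 0 < e) by (apply Rmin_glb_lt; lra).
  assert (He1 : e <= eps) by apply Rmin_l; assert (He2 : e <= 1) by apply Rmin_r.
  destruct xi_bounded as [B [HB HxB]].
  destruct (tail_radius_exists e He0) as [R1 [HR1 [Hy0 Hy]]]; set (y := zeta_tail_const / R1 ^ 2) in *.
  set (K := sqrt A0 ^ 1 * sqrt A2).
  assert (HK : 0 < K).
  { unfold K; rewrite pow_1; apply Rmult_lt_0_compat; apply sqrt_lt_R0; auto using A0_pos, A2_pos. }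
  assert (HlnR : 0 <= ln R1).
  { rewrite <- ln_1; destruct HR1 as [H | H]; [left; apply ln_increasing; lra | rewrite <- H; lra]. }
  assert (HL0 : 0 < B / (K * e) /\ 0 <= 8 * ln R1 / e).
  { split; [apply Rdiv_lt_0_compat; nra | apply Rdiv_le_0_compat; lra]. }
  exists (Rmax (R1 ^ 2) (exp (B / (K * e) + 8 * ln R1 / e))); intros snr Hs.
  assert (Hs1 := Rle_lt_trans _ _ _ (Rmax_l _ _) Hs); assert (Hs2 := Rle_lt_trans _ _ _ (Rmax_r _ _) Hs).
  assert (Hsp : 0 < snr) by (assert (H := exp_pos (B / (K * e) + 8 * ln R1 / e)); lra).
  assert (Hln : B / (K * e) + 8 * ln R1 / e < ln snr).
  { rewrite <- (ln_exp (B / (K * e) + 8 * ln R1 / e)); apply ln_increasing; auto; apply exp_pos. }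
  assert (HsqR : R1 < sqrt snr).
  { rewrite <- (sqrt_pow2 R1) by lra; apply sqrt_lt_1_alt; split; [apply pow2_ge_0 | lra]. }
  set (D := K * ln snr); assert (HD : 0 < D) by (unfold D; apply Rmult_lt_0_compat; lra).
  assert (Hup := alpha2_le snr B ltac:(lra) HxB); fold K D in Hup.
  assert (Hlow : (1 - 2 * y) * (K * (ln snr - 2 * ln R1)) <= alpha snr 2).
  { apply alpha2_ge; split; try lra; apply Rle_refl. }
  assert (HlnR' : 2 * ln R1 * K <= e / 4 * D).
  { assert (H := lt_mult_of_div_lt (8 * ln R1) e (ln snr) He0 ltac:(lra)); unfold D; nra. }
  assert (HBD : B < e * D).
  { assert (H := lt_mult_of_div_lt B (K * e) (ln snr) ltac:(nra) ltac:(lra)); unfold D; nra. }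
  apply Rabs_div_sub1_lt with ((1 - e / 4) * (1 - e / 4)) (1 + B / D); auto.
  - eapply Rle_trans; [| exact Hlow].
    replace (K * (ln snr - 2 * ln R1)) with (D - 2 * ln R1 * K) by (unfold D; ring).
    apply Rle_trans with ((1 - e / 4) * (D - 2 * ln R1 * K)).
    + rewrite Rmult_assoc; apply Rmult_le_compat_l; lra.
    + assert (e / 4 * D <= D) by nra; apply Rmult_le_compat_r; lra.
  - replace ((1 + B / D) * D) with (B + D) by (field; lra); lra.
  - nra.
  - assert (B / D < e); [| lra].
    apply Rmult_lt_reg_r with D; auto; unfold Rdiv; rewrite Rmult_assoc, Rinv_l; lra.
Qed.

Lemma is_RInt_pinfty_inv_pow_3_2 : is_RInt_pinfty (fun x => / ((1 + x) * sqrt (1 + x))) 2.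
Proof.
  assert (Hc : continuous_nonneg (fun x => / ((1 + x) * sqrt (1 + x)))).
  { intros x Hx; apply continuous_of_ex_derive.
    assert (0 < sqrt (1 + x)) by (apply sqrt_lt_R0; lra); auto_derive; nonzero; nra. }
  split; auto.
  apply is_lim_ext_loc with (f := fun b => 2 - 2 * / sqrt (1 + b)).
  - exists 0; intros b Hb.
    rewrite (is_RInt_derive_R (fun x => - 2 / sqrt (1 + x))).
    + rewrite Rplus_0_r, sqrt_1; field; apply Rgt_not_eq, sqrt_lt_R0; lra.
    + intros x Hx; rewrite Rmin_left, Rmax_right in Hx by lra.
      assert (Hs : 0 < sqrt (1 + x)) by (apply sqrt_lt_R0; lra).
      auto_derive; [nonzero |].
      assert (E : 1 + x = sqrt (1 + x) * sqrt (1 + x)) by (rewrite sqrt_sqrt; lra).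
      set (s := sqrt (1 + x)) in *; clearbody s; rewrite E; field; nonzero.
    + intros x Hx; rewrite Rmin_left, Rmax_right in Hx by lra; apply Hc; lra.
  - apply is_lim_pinfty_intro; intros eps He; exists (4 / (eps * eps)); intros x Hx.
    assert (Hx0 : 0 < x) by (apply Rlt_trans with (4 / (eps * eps)); auto; apply Rdiv_lt_0_compat; nra).
    assert (Hs : 0 < sqrt (1 + x)) by (apply sqrt_lt_R0; lra).
    replace (2 - 2 * / sqrt (1 + x) - 2) with (- (2 / sqrt (1 + x))) by (field; lra).
    rewrite Rabs_Ropp, Rabs_right by (apply Rle_ge, Rdiv_le_0_compat; lra).
    assert (H2 : 2 / eps < sqrt (1 + x)).
    { rewrite <- (sqrt_pow2 (2 / eps)) by (apply Rdiv_le_0_compat; lra).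
      apply sqrt_lt_1_alt; split; [apply pow2_ge_0 |].
      replace ((2 / eps) ^ 2) with (4 / (eps * eps)) by (field; lra); lra. }
    apply Rmult_lt_reg_r with (sqrt (1 + x)); auto; unfold Rdiv; rewrite Rmult_assoc, Rinv_l by lra.
    apply Rmult_lt_compat_l with (r := eps) in H2; auto.
    replace (eps * (2 / eps)) with 2 in H2 by (field; lra); lra.
Qed.

Lemma ex_RInt_pinfty_sqrt_zeta2 : ex_RInt_pinfty (fun r => sqrt (zeta 2 r)).
Proof.
  destruct xi_bounded as [B [HB HxB]]; assert (HA2 := A2_pos).
  apply ex_RInt_pinfty_dom with (fun x => 3 * (sqrt A2 + sqrt B) * / ((1 + x) * sqrt (1 + x)))
    (3 * (sqrt A2 + sqrt B) * 2).
  - intros x _; apply continuous_sqrt_comp, zeta_continuous, even_2.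
  - apply is_RInt_pinfty_scal, is_RInt_pinfty_inv_pow_3_2.
  - intros x Hx; rewrite Rabs_right by (apply Rle_ge, sqrt_pos).
    assert (Hs2 : sqrt 2 < 3 / 2).
    { rewrite <- (sqrt_pow2 (3 / 2)) by lra; apply sqrt_lt_1_alt; lra. }
    assert (Hsa := sqrt_pos A2); assert (Hsb := sqrt_pos B).
    assert (Hsx : 0 < sqrt (1 + x)) by (apply sqrt_lt_R0; lra).
    assert (HD : 0 < (1 + x) * sqrt (1 + x)) by nra.
    apply Rmult_le_reg_r with ((1 + x) * sqrt (1 + x)); auto.
    rewrite Rmult_assoc, Rinv_l, Rmult_1_r by lra.
    destruct (Rle_or_lt x 1) as [H1 | H1].
    + assert (Hz : sqrt (zeta 2 x) <= sqrt B) by (apply sqrt_le_1_alt, zeta_le; auto).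
      assert (Hsq : sqrt (1 + x) <= sqrt 2) by (apply sqrt_le_1_alt; lra).
      assert ((1 + x) * sqrt (1 + x) <= 3) by nra.
      assert (0 <= sqrt (zeta 2 x)) by apply sqrt_pos.
      nra.
    + destruct (zeta02_tail_bounds x (zeta_tail_const / x ^ 2) ltac:(lra) (Rle_refl _)) as [_ [_ Hz]].
      assert (Hsr : 0 < sqrt x) by (apply sqrt_lt_R0; lra).
      assert (Ex : sqrt (x ^ 3 * zeta 2 x) = x * sqrt x * sqrt (zeta 2 x)).
      { rewrite sqrt_mult by (try apply pow_le; try (left; apply zeta_pos, even_2); lra).
        replace (x ^ 3) with ((x * x) * x) by ring; rewrite sqrt_mult, sqrt_square by nra; reflexivity. }
      assert (H2 : x * sqrt x * sqrt (zeta 2 x) <= sqrt A2) by (rewrite <- Ex; apply sqrt_le_1_alt, Hz).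
      assert (Hsq : sqrt (1 + x) <= 3 / 2 * sqrt x).
      { apply Rle_trans with (sqrt (2 * x)); [apply sqrt_le_1_alt; lra |].
        rewrite sqrt_mult by lra; apply Rmult_le_compat_r; lra. }
      assert (0 <= sqrt (zeta 2 x)) by apply sqrt_pos.
      assert ((1 + x) * sqrt (1 + x) <= 3 * (x * sqrt x)) by nra.
      nra.
Qed.

Lemma alpha_large_snr_1 : forall eps : R, 0 < eps -> exists M : R, forall snr : R, M < snr ->
  Rabs (alpha snr 1 / RInt_gen (fun r => sqrt (zeta 2 r)) (at_point 0) (Rbar_locally p_infty) - 1)
  < eps.
Proof.
  intros eps He.
  assert (HL := is_RInt_pinfty_RInt_gen _ ex_RInt_pinfty_sqrt_zeta2).
  set (L := RInt_gen (fun r => sqrt (zeta 2 r)) (at_point 0) (Rbar_locally p_infty)) in *.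
  assert (HL0 : 0 < L).
  { apply (is_RInt_pinfty_gt0 _ _ HL); intros; apply sqrt_lt_R0, zeta_pos, even_2. }
  destruct (is_lim_pinfty_elim _ _ (proj2 HL) (eps * L)) as [M HM]; [nra |].
  exists (Rmax M 0 ^ 2); intros snr Hs.
  assert (Hsq : Rmax M 0 < sqrt snr).
  { rewrite <- (sqrt_pow2 (Rmax M 0)) by apply Rmax_r.
    apply sqrt_lt_1_alt; split; [apply pow2_ge_0 | exact Hs]. }
  assert (E : alpha snr 1 = RInt (fun r => sqrt (zeta 2 r)) 0 (sqrt snr)).
  { apply RInt_ext_R; intros r; unfold alpha_integrand; simpl; ring. }
  specialize (HM (sqrt snr) (Rle_lt_trans _ _ _ (Rmax_l _ _) Hsq)); rewrite <- E in HM.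
  replace (alpha snr 1 / L - 1) with ((alpha snr 1 - L) / L) by (field; lra).
  unfold Rdiv; rewrite Rabs_mult, (Rabs_right (/ L)) by (left; apply Rinv_0_lt_compat, HL0).
  apply Rmult_lt_reg_r with L; auto; rewrite Rmult_assoc, Rinv_l; lra.
Qed.

Theorem proposition2 :
  (* (i) joint regime n * snr -> 0 *)
  (forall eps : R, 0 < eps -> exists delta : R, 0 < delta /\
     forall (n : nat) (snr : R), (1 <= n)%nat -> 0 < snr -> INR n * snr < delta ->
       Rabs (alpha snr n / (sqrt (2 / PI * snr)) ^ n - 1) < eps)
  /\
  (* (ii), n = 1 *)
  (forall eps : R, 0 < eps -> exists M : R, forall snr : R, M < snr ->
       Rabs (alpha snr 1 /
             RInt_gen (fun r => sqrt (zeta 2 r)) (at_point 0) (Rbar_locally p_infty)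
             - 1) < eps)
  /\
  (* (ii), n = 2 *)
  (forall eps : R, 0 < eps -> exists M : R, forall snr : R, M < snr ->
       Rabs (alpha snr 2 / (sqrt A0 ^ 1 * sqrt A2 * ln snr) - 1) < eps)
  /\
  (* (ii), n >= 3, joint regime snr / n -> oo *)
  (forall eps : R, 0 < eps -> exists M : R, forall (n : nat) (snr : R),
       (3 <= n)%nat -> 0 < snr -> M < snr / INR n ->
       Rabs (alpha snr n /
             (2 * INR n / (INR n - 2) * sqrt A0 ^ (n - 1) * sqrt A2
              * Rpower snr ((INR n - 2) / 4)) - 1) < eps).
Proof.
  split; [exact alpha_small_snr |].
  split; [exact alpha_large_snr_1 |].
  split; [exact alpha_large_snr_2 | exact alpha_large_snr_ge3].
Qed.
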